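(* Let $\mathcal X,\mathcal Y$ be finite or countably infinite sets, let $P_X,Q_X$ be probability mass functions with $P_X(x)>0$ and $Q_X(x)>0$ for all $x\in\mathcal X$, and let $$\xi_1:=\inf_{x\in\mathcal X}\frac{P_X(x)}{Q_X(x)}\in[0,1],\qquad \xi_2:=\sup_{x\in\mathcal X}\frac{P_X(x)}{Q_X(x)}\in[1,\infty].$$ Let $W_{Y|X}$ be a stochastic transformation from $\mathcal X$ to $\mathcal Y$ such that for every $y\in\mathcal Y$ there is $x\in\mathcal X$ with $W_{Y|X}(y|x)>0$, and let $P_Y:=P_XW_{Y|X}$, $Q_Y:=Q_XW_{Y|X}$, i.e. $P_Y(y)=\sum_x P_X(x)W_{Y|X}(y|x)$ and $Q_Y(y)=\sum_xQ_X(x)W_{Y|X}(y|x)$. Let $f:(0,\infty)\to\mathbb R$ be convex with $f(1)=0$, let $\mathcal I:=\mathcal I(\xi_1,\xi_2):=[\xi_1,\xi_2]\cap(0,\infty)$, and let $c_f=c_f(\xi_1,\xi_2)\ge 0$ be a constant such that $$f'_+(v)-f'_+(u)\ge 2c_f\,(v-u)\qquad\forall\,u,v\in\mathcal I,\ u<v,$$ where $f'_+$ is the right derivative of $f$. Then: (a) $D_f(P_X\|Q_X)-D_f(P_Y\|Q_Y)\ge c_f(\xi_1,\xi_2)\,[\chi^2(P_X\|Q_X)-\chi^2(P_Y\|Q_Y)]\ge 0$, with equality in the first inequality when $D_f$ is the $\chi^2$-divergence and $c_f\equiv 1$. (b) If $f$ is twice differentiable on $\mathcal I$, the largest constant satisfying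 the condition above is $c_f(\xi_1,\xi_2)=\tfrac12\inf_{t\in\mathcal I}f''(t)$. (c) Under the assumption of (b), with $f^\ast(t):=t f(1/t)$ for $t>0$, $$D_f(P_X\|Q_X)-D_f(P_Y\|Q_Y)\ge c_{f^\ast}\!\left(\tfrac1{\xi_2},\tfrac1{\xi_1}\right)[\chi^2(Q_X\|P_X)-\chi^2(Q_Y\|P_Y)]\ge 0,$$ where $c_{f^\ast}(\tfrac1{\xi_2},\tfrac1{\xi_1})=\tfrac12\inf_{t\in\mathcal I}\{t^3f''(t)\}$ (with $1/\xi_1:=\infty$ if $\xi_1=0$); equality holds in the first inequality when $D_f(P\|Q)=\chi^2(Q\|P)$ (Neyman's $\chi^2$-divergence) with $c_{f^\ast}\equiv1$. (d) Under the assumption of (b), if $e_f(\xi_1,\xi_2):=\tfrac12\sup_{t\in\mathcal I}f''(t)<\infty$, then $D_f(P_X\|Q_X)-D_f(P_Y\|Q_Y)\le e_f(\xi_1,\xi_2)[\chi^2(P_X\|Q_X)-\chi^2(P_Y\|Q_Y)]$; and if $e_{f^\ast}(\tfrac1{\xi_2},\tfrac1{\xi_1}):=\tfrac12\sup_{t\in\mathcal I}\{t^3f''(t)\}<\infty$, then $D_f(P_X\|Q_X)-D_f(P_Y\|Q_Y)\le e_{f^\ast}(\tfrac1{\xi_2},\tfrac1{\xi_1})[\chi^2(Q_X\|P_X)-\chi^2(Q_Y\|P_Y)]$. These hold with equality for Pearson's, resp. Neyman's, $\chi^2$-divergence with $e_f\equiv1$, resp. $e_{f^\ast}\equiv1$.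 (e) Let $\{P_X^{(n)}\}$ be probability mass functions on $\mathcal X$ converging pointwise to $Q_X$ (supported on $\mathcal X$), with $P_Y^{(n)}:=P_X^{(n)}W_{Y|X}$, such that $\lim_n\inf_x P^{(n)}_X(x)/Q_X(x)=1$ and $\lim_n\sup_xP_X^{(n)}(x)/Q_X(x)=1$. If $f$ has a continuous second derivative at $1$, then $$\lim_{n\to\infty}\frac{D_f(P_X^{(n)}\|Q_X)-D_f(P_Y^{(n)}\|Q_Y)}{\chi^2(P_X^{(n)}\|Q_X)-\chi^2(P_Y^{(n)}\|Q_Y)}=\tfrac12f''(1)=\lim_{n\to\infty}\frac{D_f(P_X^{(n)}\|Q_X)-D_f(P_Y^{(n)}\|Q_Y)}{\chi^2(Q_X\|P_X^{(n)})-\chi^2(Q_Y\|P_Y^{(n)})}.$$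
   Context: For a convex $f:(0,\infty)\to\mathbb R$ with $f(1)=0$ and probability mass functions $P,Q$ on a countable set, the $f$-divergence is $D_f(P\|Q):=\sum_x Q(x)f(P(x)/Q(x))$, with conventions $f(0):=\lim_{t\to0^+}f(t)$, $0f(0/0):=0$, $0f(a/0):=a\lim_{u\to\infty}f(u)/u$ for $a>0$ (for general measures, $D_f(P\|Q)=\int q f(p/q)\,d\mu$ with $p,q$ densities w.r.t. a dominating $\mu$). Pearson's $\chi^2$-divergence is $\chi^2(P\|Q):=D_f(P\|Q)$ with $f(t)=(t-1)^2$, i.e. $\sum_x (P(x)-Q(x))^2/Q(x)$. *)

From Stdlib Require Import Reals Lra List Classical ClassicalEpsilon.
Open Scope R_scope.

Inductive ER : Type := Fin (r : R) | PInf.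

(** Supremum of a set of reals, in ER (+oo if unbounded above);
    the set is assumed non-empty where used. *)
Definition sup_ER (E : R -> Prop) : ER :=
  match excluded_middle_informative (bound E) with
  | left Hb =>
      match excluded_middle_informative (exists x, E x) with
      | left Hn => Fin (proj1_sig (completeness E Hb Hn))
      | right _ => Fin 0
      end
  | right _ => PInf
  end.

(** Real supremum / infimum of a set of reals (junk value 0 if the set is
    empty or unbounded on the relevant side). *)
Definition Rsup (E : R -> Prop) : R :=
  match sup_ER E with Fin r => r | PInf => 0 end.
Definition Rinf (E : R -> Prop) : R := - Rsup (fun y => E (- y)).

Definition lsum {T : Type} (g : T -> R) (l : list T) : R :=
  fold_right (fun x acc => g x + acc) 0 l.

Definition sumER {T : Type} (g : T -> R) : ER :=
  sup_ER (fun s => exists l : list T, NoDup l /\ s = lsum g l).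

(** Sum of a real family, as (sum of positive parts) - (sum of negative parts);
    used only when the negative parts are summable (always the case for an
    f-divergence with f convex). *)
Definition ssum {T : Type} (g : T -> R) : ER :=
  match sumER (fun x => Rmax (g x) 0), sumER (fun x => Rmax (- g x) 0) with
  | Fin a, Fin b => Fin (a - b)
  | PInf, Fin _ => PInf
  | _, PInf => Fin 0 (* junk, never occurs for f-divergences *)
  end.

Definition countable (T : Type) : Prop :=
  exists enc : T -> nat, forall x y, enc x = enc y -> x = y.

Definition pmf {T : Type} (P : T -> R) : Prop :=
  (forall x, 0 <= P x) /\ sumER P = Fin 1.

(** Stochastic transformation W(y|x) written W x y. *)
Definition stochastic {X Y : Type} (W : X -> Y -> R) : Prop :=
  (forall x y, 0 <= W x y) /\ (forall x, sumER (W x) = Fin 1).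

(** Output distribution P W : y |-> sum_x P(x) W(y|x) (always finite). *)
Definition push {X Y : Type} (P : X -> R) (W : X -> Y -> R) (y : Y) : R :=
  match sumER (fun x => P x * W x y) with Fin r => r | PInf => 0 end.

(** f-divergence D_f(P||Q) = sum_x Q(x) f(P(x)/Q(x)) (for Q > 0 everywhere,
    which is the case for all divergences in the theorem). *)
Definition Df {T : Type} (f : R -> R) (P Q : T -> R) : ER :=
  ssum (fun x => Q x * f (P x / Q x)).

Definition chi2 {T : Type} (P Q : T -> R) : ER :=
  Df (fun t => (t - 1) ^ 2) P Q.

Definition convex_pos (f : R -> R) : Prop :=
  forall x y t, 0 < x -> 0 < y -> 0 <= t <= 1 ->
    f (t * x + (1 - t) * y) <= t * f x + (1 - t) * f y.

Definition is_rderiv (f : R -> R) (v l : R) : Prop :=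
  forall eps, 0 < eps -> exists delta, 0 < delta /\
    forall h, 0 < h < delta -> Rabs ((f (v + h) - f v) / h - l) < eps.

(** The interval I(xi1, xi2) = [xi1, xi2] ∩ (0, oo), where
    xi1 = inf_x r(x), xi2 = sup_x r(x) (possibly +oo), r(x) = P(x)/Q(x).
    t >= inf r  iff every lower bound of r is <= t;
    t <= sup r  iff t is <= every upper bound of r (vacuous when sup = +oo). *)
Definition intI {T : Type} (P Q : T -> R) (t : R) : Prop :=
  0 < t /\
  (forall m, (forall x, m <= P x / Q x) -> m <= t) /\
  (forall M, (forall x, P x / Q x <= M) -> t <= M).

Definition cf_ok (f : R -> R) (I : R -> Prop) (c : R) : Prop :=
  0 <= c /\
  forall u v a b, I u -> I v -> u < v ->
    is_rderiv f u a -> is_rderiv f v b -> b - a >= 2 * c * (v - u).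

Definition twice_diff_on (f : R -> R) (I : R -> Prop) (f2 : R -> R) : Prop :=
  exists f1 : R -> R,
    (forall t, I t -> exists d, 0 < d /\
        forall s, Rabs (s - t) < d -> derivable_pt_lim f s (f1 s)) /\
    (forall t, I t -> derivable_pt_lim f1 t (f2 t)).

Definition C2_at_1 (f : R -> R) (f2 : R -> R) : Prop :=
  exists d f1, 0 < d /\
    (forall s, Rabs (s - 1) < d ->
       derivable_pt_lim f s (f1 s) /\ derivable_pt_lim f1 s (f2 s)) /\
    continuity_pt f2 1.

Definition img (I : R -> Prop) (g : R -> R) : R -> Prop :=
  fun y => exists t, I t /\ y = g t.

(** "a - b >= c (d - e) >= 0" read on the real values of the four
    (extended-real) quantities, whenever they are finite. *)
Definition ge_diff (A B C D : ER) (c : R) : Prop :=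
  forall a b d e, A = Fin a -> B = Fin b -> C = Fin d -> D = Fin e ->
    c * (d - e) <= a - b /\ 0 <= c * (d - e).
Definition le_diff (A B C D : ER) (c : R) : Prop :=
  forall a b d e, A = Fin a -> B = Fin b -> C = Fin d -> D = Fin e ->
    a - b <= c * (d - e).

(** "lim_n (A n - B n)/(C n - D n) = L", the ratio being considered at those
    n where the four quantities are finite and the denominator is non-zero. *)
Definition ratio_lim (A B C D : nat -> ER) (L : R) : Prop :=
  forall eps, 0 < eps -> exists N, forall n a b d e, (N <= n)%nat ->
    A n = Fin a -> B n = Fin b -> C n = Fin d -> D n = Fin e -> d - e <> 0 ->
    Rabs ((a - b) / (d - e) - L) < eps.

(* Write [r(x) = P_X(x)/Q_X(x)] and [s(y) = P_Y(y)/Q_Y(y)].  Since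
   [sum_x Q_X(x) W(y|x) (r(x) - s(y)) = P_Y(y) - s(y) Q_Y(y) = 0], the drop
   [D_f(P_X||Q_X) - D_f(P_Y||Q_Y)] equals
   [sum_{x,y} Q_X(x) W(y|x) (f(r(x)) - f(s(y)) - f'_+(s(y)) (r(x) - s(y)))],
   a sum of Bregman residuals of [f] between points of [I], and [s(y)] lies in [I] too.
   Every inequality therefore follows from a pointwise comparison of residuals on [I]
   with those of [(t-1)^2] (Pearson) or [(1-t)^2/t] (whose [f]-divergence is Neyman's
   [chi^2(Q||P)]): the slope condition on [f'_+] bounds the residual of [f] below by
   [c_f (v-u)^2], and bounds on [f''] or [t^3 f''] compare residuals by Taylor's theorem.
   Part (e) follows because [I] shrinks to [{1}], and optimality in (b) from the difference
   quotients of [f'].  All series are made nonnegative by subtracting affine minorants of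
   the convex functions involved, so only sums of nonnegative families are ever needed. *)

From Stdlib Require Import Reals Lra Lia List Classical ClassicalEpsilon FunctionalExtensionality.
From Coquelicot Require Coquelicot.
Open Scope R_scope.

Lemma Rle_div_iff m z h : 0 < h -> (m <= z / h <-> m * h <= z).
Proof.
  intros Hh. replace z with (z / h * h) at 2 by (field; lra).
  split; intros H; [apply Rmult_le_compat_r | apply Rmult_le_reg_r in H]; lra.
Qed.

Lemma Rdiv_le_iff z M h : 0 < h -> (z / h <= M <-> z <= M * h).
Proof.
  intros Hh. replace z with (z / h * h) at 2 by (field; lra).
  split; intros H; [apply Rmult_le_compat_r | apply Rmult_le_reg_r in H]; lra.
Qed.

Lemma Rdiv_le_div_iff a b c d : 0 < b -> 0 < d -> (a / b <= c / d <-> a * d <= c * b).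
Proof.
  intros Hb Hd. rewrite Rle_div_iff by exact Hd.
  replace (a / b * d) with (a * d / b) by (field; lra). now apply Rdiv_le_iff.
Qed.

Lemma le_of_le_sub_div_INR Z D : 0 <= Z -> (forall n, (1 <= n)%nat -> Z - Z / INR n <= D) -> Z <= D.
Proof.
  intros HZ H. apply Rle_plus_epsilon. intros eps He.
  destruct (archimed_cor1 (eps / (Z + 1)) ltac:(apply Rdiv_lt_0_compat; lra)) as [n [Hn Hn0]].
  specialize (H n ltac:(lia)).
  assert (0 < INR n) by (apply lt_0_INR; lia).
  assert (Z / INR n <= (Z + 1) * / INR n) by (apply Rmult_le_compat_r; [left; now apply Rinv_0_lt_compat|lra]).
  assert ((Z + 1) * / INR n < eps).
  { apply (Rmult_lt_compat_l (Z + 1)) in Hn; [|lra]. now replace ((Z + 1) * (eps / (Z + 1))) with eps in Hn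
      by (field; lra). }
  lra.
Qed.

(** * Sums of nonnegative families *)

Definition classic_eq_dec {T : Type} (x y : T) : {x = y} + {x <> y} :=
  excluded_middle_informative (x = y).

Lemma incl_nodup {T : Type} (l L : list T) : incl l L -> incl l (nodup classic_eq_dec L).
Proof. intros H x Hx. now apply nodup_In, H. Qed.

Definition nonneg {T : Type} (g : T -> R) : Prop := forall x, 0 <= g x.

Definition has_sum {T : Type} (g : T -> R) (s : R) : Prop :=
  is_lub (fun s => exists l : list T, NoDup l /\ s = lsum g l) s.

Section FiniteSums.
Context {T : Type}.
Implicit Types (g h : T -> R) (l : list T).

Lemma lsum_cons g a l : lsum g (a :: l) = g a + lsum g l.
Proof. reflexivity. Qed.

Lemma lsum_plus g h l : lsum (fun x => g x + h x) l = lsum g l + lsum h l.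
Proof. induction l; rewrite ?lsum_cons; simpl in *; lra. Qed.

Lemma lsum_scal g c l : lsum (fun x => c * g x) l = c * lsum g l.
Proof. induction l; rewrite ?lsum_cons; simpl in *; lra. Qed.

Lemma lsum_ext g h l : (forall x, g x = h x) -> lsum g l = lsum h l.
Proof. intros E; induction l; rewrite ?lsum_cons, ?E; simpl in *; lra. Qed.

Lemma lsum_le g h l : (forall x, g x <= h x) -> lsum g l <= lsum h l.
Proof. intros E; induction l; rewrite ?lsum_cons; simpl in *; [lra|]. specialize (E a); lra. Qed.

Lemma lsum_nonneg g l : nonneg g -> 0 <= lsum g l.
Proof. intros H. induction l; rewrite ?lsum_cons; simpl; [lra|]. specialize (H a). lra. Qed.

Lemma lsum_remove_le g a l : nonneg g -> lsum g (remove classic_eq_dec a l) <= lsum g l.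
Proof.
  intros H. induction l as [|b l IH]; simpl; [lra|].
  destruct (classic_eq_dec a b); rewrite ?lsum_cons; specialize (H b); lra.
Qed.

Lemma lsum_remove_In g a l : nonneg g -> In a l ->
  g a + lsum g (remove classic_eq_dec a l) <= lsum g l.
Proof.
  intros H Hin. induction l as [|b l IH]; [contradiction|]. simpl remove.
  destruct (classic_eq_dec a b) as [<-|ne].
  - pose proof (lsum_remove_le g a l H). rewrite lsum_cons. lra.
  - destruct Hin as [->|Hin]; [congruence|]. rewrite !lsum_cons. specialize (IH Hin). lra.
Qed.

Lemma lsum_incl g l1 l2 : nonneg g -> NoDup l1 -> incl l1 l2 -> lsum g l1 <= lsum g l2.
Proof.
  intros H. revert l2. induction l1 as [|a l1 IH]; intros l2 Hnd Hi.
  - apply lsum_nonneg, H.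
  - apply NoDup_cons_iff in Hnd as [Hna Hnd].
    assert (Hi' : incl l1 (remove classic_eq_dec a l2)).
    { intros x Hx. apply in_in_remove; [intros ->; contradiction|]. apply Hi; now right. }
    specialize (IH _ Hnd Hi'). pose proof (lsum_remove_In g a l2 H (Hi a (or_introl eq_refl))).
    rewrite lsum_cons. lra.
Qed.

End FiniteSums.

Section HasSum.
Context {T : Type}.
Implicit Types (g h : T -> R) (l : list T).

Lemma has_sum_ub g s l : has_sum g s -> NoDup l -> lsum g l <= s.
Proof. intros [H _] Hl. apply H. now exists l. Qed.

Lemma has_sum_least g s M : has_sum g s ->
  (forall l, NoDup l -> lsum g l <= M) -> s <= M.
Proof. intros [_ H] HM. apply H. intros x [l [Hl ->]]. auto. Qed.

Lemma has_sum_intro g s : (forall l, NoDup l -> lsum g l <= s) ->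
  (forall M, (forall l, NoDup l -> lsum g l <= M) -> s <= M) -> has_sum g s.
Proof.
  intros H1 H2. split.
  - intros x [l [Hl ->]]. auto.
  - intros b Hb. apply H2. intros l Hl. apply Hb. now exists l.
Qed.

Lemma partial_sums_inhabited g : exists s, exists l : list T, NoDup l /\ s = lsum g l.
Proof. exists 0, nil. split; [constructor|reflexivity]. Qed.

Lemma has_sum_exists g M : (forall l, NoDup l -> lsum g l <= M) -> exists s, has_sum g s.
Proof.
  intros H. refine (let (s, Hs) := completeness _ _ (partial_sums_inhabited g) in ex_intro _ s Hs).
  exists M. intros x [l [Hl ->]]. auto.
Qed.

Lemma has_sum_unique g s t : has_sum g s -> has_sum g t -> s = t.
Proof.
  intros Hs Ht. apply Rle_antisym.
  - apply (has_sum_least g s t Hs). intros l Hl. now apply has_sum_ub.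
  - apply (has_sum_least g t s Ht). intros l Hl. now apply has_sum_ub.
Qed.

Lemma has_sum_nonneg g s : has_sum g s -> 0 <= s.
Proof. intros H. exact (has_sum_ub g s nil H (NoDup_nil _)). Qed.

Lemma has_sum_approx g s eps : has_sum g s -> 0 < eps ->
  exists l, NoDup l /\ s - eps < lsum g l.
Proof.
  intros H He. apply NNPP. intros C.
  enough (s <= s - eps) by lra.
  apply (has_sum_least g s _ H). intros l Hl. apply Rnot_lt_le. intros Hlt. apply C. eauto.
Qed.

Lemma has_sum_inhabited g s : has_sum g s -> 0 < s -> inhabited T.
Proof.
  intros H Hs. destruct (has_sum_approx g s s H Hs) as [[|x l] [_ Hl]].
  - simpl in Hl. lra.
  - now constructor.
Qed.

Lemma has_sum_term_le g s x : has_sum g s -> g x <= s.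
Proof.
  intros H. assert (Hx : NoDup (x :: nil)) by (repeat constructor; auto).
  pose proof (has_sum_ub g s _ H Hx). simpl in *. lra.
Qed.

Lemma has_sum_zero : has_sum (fun _ : T => 0) 0.
Proof.
  apply has_sum_intro.
  - intros l _. induction l; simpl in *; lra.
  - intros M H. exact (H nil (NoDup_nil _)).
Qed.

Lemma has_sum_ext g h s : (forall x, g x = h x) -> has_sum g s -> has_sum h s.
Proof.
  intros E H. apply has_sum_intro.
  - intros l Hl. rewrite <- (lsum_ext g h l E). now apply has_sum_ub.
  - intros M HM. apply (has_sum_least g s M H). intros l Hl. rewrite (lsum_ext g h l E). auto.
Qed.

Lemma has_sum_le g h s t : (forall x, g x <= h x) -> has_sum g s -> has_sum h t -> s <= t.
Proof.
  intros E Hs Ht. apply (has_sum_least g s t Hs). intros l Hl.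
  pose proof (lsum_le g h l E). pose proof (has_sum_ub h t l Ht Hl). lra.
Qed.

Lemma has_sum_compare g h t : (forall x, g x <= h x) -> has_sum h t -> exists s, has_sum g s.
Proof.
  intros E Ht. apply (has_sum_exists g t). intros l Hl.
  pose proof (lsum_le g h l E). pose proof (has_sum_ub h t l Ht Hl). lra.
Qed.

Lemma has_sum_plus g h s t : nonneg g -> nonneg h -> has_sum g s -> has_sum h t ->
  has_sum (fun x => g x + h x) (s + t).
Proof.
  intros Hg Hh Hs Ht. apply has_sum_intro.
  - intros l Hl. rewrite lsum_plus.
    pose proof (has_sum_ub g s l Hs Hl). pose proof (has_sum_ub h t l Ht Hl). lra.
  - intros M HM.
    assert (Hsplit : forall l1 l2, NoDup l1 -> NoDup l2 -> lsum g l1 + lsum h l2 <= M).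
    { intros l1 l2 H1 H2. set (l := nodup classic_eq_dec (l1 ++ l2)).
      pose proof (lsum_incl g l1 l Hg H1 (incl_nodup l1 (l1 ++ l2) ltac:(auto with datatypes))).
      pose proof (lsum_incl h l2 l Hh H2 (incl_nodup l2 (l1 ++ l2) ltac:(auto with datatypes))).
      specialize (HM l (NoDup_nodup _ _)). rewrite lsum_plus in HM. lra. }
    enough (t <= M - s) by lra.
    apply (has_sum_least h t _ Ht). intros l2 H2.
    enough (s <= M - lsum h l2) by lra.
    apply (has_sum_least g s _ Hs). intros l1 H1. specialize (Hsplit l1 l2 H1 H2). lra.
Qed.

Lemma has_sum_scal g s c : 0 <= c -> has_sum g s -> has_sum (fun x => c * g x) (c * s).
Proof.
  intros Hc H. destruct (Req_dec c 0) as [->|ne].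
  - apply (has_sum_ext (fun _ => 0)); [intros; ring|]. rewrite Rmult_0_l. apply has_sum_zero.
  - apply has_sum_intro.
    + intros l Hl. rewrite lsum_scal. apply Rmult_le_compat_l; [lra|]. now apply has_sum_ub.
    + intros M HM. rewrite Rmult_comm. apply Rle_div_iff; [lra|].
      apply (has_sum_least g s _ H). intros l Hl. apply Rle_div_iff; [lra|].
      rewrite Rmult_comm, <- lsum_scal. auto.
Qed.

Lemma has_sum_scal_le g h s t a b : 0 <= a -> 0 <= b ->
  (forall x, a * g x <= b * h x) -> has_sum g s -> has_sum h t -> a * s <= b * t.
Proof.
  intros Ha Hb E Hs Ht. exact (has_sum_le _ _ _ _ E (has_sum_scal g s a Ha Hs) (has_sum_scal h t b Hb Ht)).
Qed.

Lemma has_sum_approx_incl g s eps : nonneg g -> has_sum g s -> 0 < eps ->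
  exists l0, forall l, NoDup l -> incl l0 l -> Rabs (lsum g l - s) < eps.
Proof.
  intros N H He. destruct (has_sum_approx g s eps H He) as [l0 [D0 A0]].
  exists l0. intros l Hl Hi. pose proof (lsum_incl g l0 l N D0 Hi).
  pose proof (has_sum_ub g s l H Hl). apply Rabs_def1; lra.
Qed.

End HasSum.

Lemma has_sum_lsum_family {T U : Type} (h : T -> U -> R) (B : U -> R) ly :
  (forall x y, 0 <= h x y) -> (forall y, has_sum (fun x => h x y) (B y)) ->
  has_sum (fun x => lsum (h x) ly) (lsum B ly).
Proof.
  intros Hn HB. induction ly as [|y ly IH].
  - exact has_sum_zero.
  - apply (has_sum_plus (fun x => h x y) (fun x => lsum (h x) ly)); auto.
    + intros x. apply Hn.
    + intros x. apply lsum_nonneg. intros y'. apply Hn.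
Qed.

Section Fubini.
Context {T U : Type} (h : T -> U -> R) (A : T -> R) (S : R) (B : U -> R).
Hypotheses (Hn : forall x y, 0 <= h x y) (HA : forall x, has_sum (h x) (A x)) (HS : has_sum A S)
  (HB : forall y, has_sum (fun x => h x y) (B y)).

Lemma lsum_swap_le ly : NoDup ly -> lsum B ly <= S.
Proof.
  intros Hly. apply (has_sum_le _ _ _ _ (fun x => has_sum_ub (h x) (A x) ly (HA x) Hly)
    (has_sum_lsum_family h B ly Hn HB) HS).
Qed.

End Fubini.

Lemma has_sum_swap {T U : Type} (h : T -> U -> R) (A : T -> R) S (B : U -> R) :
  (forall x y, 0 <= h x y) -> (forall x, has_sum (h x) (A x)) -> has_sum A S ->
  (forall y, has_sum (fun x => h x y) (B y)) -> has_sum B S.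
Proof.
  intros Hn HA HS HB.
  pose proof (lsum_swap_le h A S B Hn HA HS HB) as K.
  destruct (has_sum_exists B S K) as [S' HS'].
  assert (S' <= S) by exact (has_sum_least B S' S HS' K).
  assert (S <= S').
  { apply (has_sum_least A S S' HS).
    exact (lsum_swap_le (fun y x => h x y) B S' A (fun y x => Hn x y) HB HS' HA). }
  now replace S with S' by lra.
Qed.

Lemma has_sum_swap_exists {T U : Type} (h : T -> U -> R) (A : T -> R) S :
  (forall x, has_sum (h x) (A x)) -> has_sum A S -> forall y, exists b, has_sum (fun x => h x y) b.
Proof.
  intros HA HS y. apply (has_sum_compare _ A S); auto.
  intros x. apply (has_sum_term_le (h x) (A x) y (HA x)).
Qed.

Lemma mult_le_Rabs_approx c a s e : Rabs (a - s) < e -> c * a <= c * s + Rabs c * e.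
Proof.
  intros H. assert (c * (a - s) <= Rabs c * e).
  { eapply Rle_trans; [apply Rle_abs|]. rewrite Rabs_mult.
    apply Rmult_le_compat_l; [apply Rabs_pos|lra]. }
  lra.
Qed.

(* Each of the four sums is approximated along one common finite list. *)
Lemma has_sum_lin4_nonneg {T : Type} (g1 g2 g3 g4 : T -> R) s1 s2 s3 s4 c1 c2 c3 c4 :
  nonneg g1 -> nonneg g2 -> nonneg g3 -> nonneg g4 ->
  has_sum g1 s1 -> has_sum g2 s2 -> has_sum g3 s3 -> has_sum g4 s4 ->
  (forall l, NoDup l -> 0 <= c1 * lsum g1 l + c2 * lsum g2 l + c3 * lsum g3 l + c4 * lsum g4 l) ->
  0 <= c1 * s1 + c2 * s2 + c3 * s3 + c4 * s4.
Proof.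
  intros N1 N2 N3 N4 H1 H2 H3 H4 Hl. apply Rle_plus_epsilon. intros eps He.
  set (K := Rabs c1 + Rabs c2 + Rabs c3 + Rabs c4 + 1).
  assert (HK : 0 < K) by (unfold K; pose proof (Rabs_pos c1); pose proof (Rabs_pos c2);
    pose proof (Rabs_pos c3); pose proof (Rabs_pos c4); lra).
  assert (He' : 0 < eps / K) by (apply Rdiv_lt_0_compat; lra).
  destruct (has_sum_approx_incl g1 s1 _ N1 H1 He') as [l1 A1].
  destruct (has_sum_approx_incl g2 s2 _ N2 H2 He') as [l2 A2].
  destruct (has_sum_approx_incl g3 s3 _ N3 H3 He') as [l3 A3].
  destruct (has_sum_approx_incl g4 s4 _ N4 H4 He') as [l4 A4].
  set (l := nodup classic_eq_dec (l1 ++ l2 ++ l3 ++ l4)).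
  assert (Dl : NoDup l) by apply NoDup_nodup.
  pose proof (mult_le_Rabs_approx c1 _ _ _ (A1 l Dl (incl_nodup l1 (l1 ++ l2 ++ l3 ++ l4) ltac:(auto with datatypes)))).
  pose proof (mult_le_Rabs_approx c2 _ _ _ (A2 l Dl (incl_nodup l2 (l1 ++ l2 ++ l3 ++ l4) ltac:(auto with datatypes)))).
  pose proof (mult_le_Rabs_approx c3 _ _ _ (A3 l Dl (incl_nodup l3 (l1 ++ l2 ++ l3 ++ l4) ltac:(auto with datatypes)))).
  pose proof (mult_le_Rabs_approx c4 _ _ _ (A4 l Dl (incl_nodup l4 (l1 ++ l2 ++ l3 ++ l4) ltac:(auto with datatypes)))).
  specialize (Hl l Dl).
  assert ((Rabs c1 + Rabs c2 + Rabs c3 + Rabs c4) * (eps / K) <= eps).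
  { replace eps with (K * (eps / K)) at 2 by (field; lra).
    apply Rmult_le_compat_r; [lra|unfold K; lra]. }
  lra.
Qed.

(** * Suprema in [ER] *)

Lemma sup_ER_is_lub (E : R -> Prop) s : sup_ER E = Fin s -> (exists x, E x) -> is_lub E s.
Proof.
  unfold sup_ER. intros H Hn.
  destruct (excluded_middle_informative (bound E)); [|discriminate].
  destruct (excluded_middle_informative (exists x, E x)); [|contradiction].
  injection H as <-. apply proj2_sig.
Qed.

Lemma is_lub_sup_ER (E : R -> Prop) s : is_lub E s -> (exists x, E x) -> sup_ER E = Fin s.
Proof.
  intros Hl Hn. unfold sup_ER.
  destruct (excluded_middle_informative (bound E)) as [Hb|Hb].
  2:{ exfalso. apply Hb. exists s. apply Hl. }
  destruct (excluded_middle_informative (exists x, E x)); [|contradiction].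
  f_equal. destruct (completeness E Hb _) as [m Hm]. simpl.
  destruct Hl as [A B], Hm as [C D]. apply Rle_antisym; auto.
Qed.

Lemma sup_ER_unbounded (E : R -> Prop) : ~ bound E -> sup_ER E = PInf.
Proof. intros H. unfold sup_ER. destruct (excluded_middle_informative (bound E)); tauto. Qed.

Lemma sumER_has_sum {T : Type} (g : T -> R) s : sumER g = Fin s -> has_sum g s.
Proof. intros H. exact (sup_ER_is_lub _ s H (partial_sums_inhabited g)). Qed.

Lemma has_sum_sumER {T : Type} (g : T -> R) s : has_sum g s -> sumER g = Fin s.
Proof. intros H. exact (is_lub_sup_ER _ s H (partial_sums_inhabited g)). Qed.

Lemma sumER_cases {T : Type} (g : T -> R) : (exists s, has_sum g s /\ sumER g = Fin s) \/ sumER g = PInf.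
Proof.
  destruct (classic (exists s, has_sum g s)) as [[s Hs]|Hn].
  - left. exists s. split; [exact Hs|]. now apply has_sum_sumER.
  - right. apply sup_ER_unbounded. intros [M HM]. apply Hn. apply (has_sum_exists g M).
    intros l Hl. apply HM. now exists l.
Qed.

Lemma Rsup_is_lub (E : R -> Prop) : bound E -> (exists x, E x) -> is_lub E (Rsup E).
Proof.
  intros Hb Hn. unfold Rsup, sup_ER.
  destruct (excluded_middle_informative (bound E)); [|contradiction].
  destruct (excluded_middle_informative (exists x, E x)); [|contradiction].
  apply proj2_sig.
Qed.

Lemma Rsup_unbounded (E : R -> Prop) : ~ bound E -> Rsup E = 0.
Proof. intros H. unfold Rsup. now rewrite sup_ER_unbounded. Qed.

Lemma Rsup_ub (E : R -> Prop) x : bound E -> E x -> x <= Rsup E.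
Proof. intros Hb Hx. now apply (Rsup_is_lub E Hb (ex_intro _ x Hx)). Qed.

Lemma Rsup_least (E : R -> Prop) M : (exists x, E x) -> (forall x, E x -> x <= M) -> Rsup E <= M.
Proof.
  intros Hn HM. assert (Hb : bound E) by now exists M.
  now apply (Rsup_is_lub E Hb Hn).
Qed.

Lemma Rinf_lb (E : R -> Prop) x m : (forall y, E y -> m <= y) -> E x -> Rinf E <= x.
Proof.
  intros Hm Hx. unfold Rinf.
  enough (- x <= Rsup (fun y => E (- y))) by lra.
  apply Rsup_ub.
  - exists (- m). intros y Hy. specialize (Hm _ Hy). lra.
  - now rewrite Ropp_involutive.
Qed.

Lemma Rinf_greatest (E : R -> Prop) m : (exists x, E x) -> (forall y, E y -> m <= y) -> m <= Rinf E.
Proof.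
  intros [x Hx] Hm. unfold Rinf.
  enough (Rsup (fun y => E (- y)) <= - m) by lra.
  apply Rsup_least.
  - exists (- x). now rewrite Ropp_involutive.
  - intros y Hy. specialize (Hm _ Hy). lra.
Qed.

Lemma img_Rinf_Rsup_const (I : R -> Prop) (g : R -> R) c t0 : I t0 ->
  (forall t, I t -> g t = c) -> Rinf (img I g) = c /\ Rsup (img I g) = c.
Proof.
  intros I0 Hg.
  assert (Hall : forall y, img I g y -> y = c) by (intros y [t [It ->]]; auto).
  assert (Hin : img I g c) by (exists t0; split; [|symmetry]; auto).
  assert (Hb : forall y, img I g y -> c <= y /\ y <= c) by (intros y Hy; rewrite (Hall y Hy); lra).
  split; apply Rle_antisym.
  - apply (Rinf_lb _ _ c); auto. apply Hb.
  - apply Rinf_greatest; [now exists c|]. apply Hb.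
  - apply Rsup_least; [now exists c|]. apply Hb.
  - apply Rsup_ub; auto. exists c. intros y Hy. apply Hb, Hy.
Qed.

(** * Signed sums and [f]-divergences *)

Lemma ssum_shift_has_sum {T : Type} (g gt k1 k2 : T -> R) K1 K2 a :
  nonneg gt -> nonneg k1 -> nonneg k2 -> has_sum k1 K1 -> has_sum k2 K2 ->
  (forall x, g x = gt x + k1 x - k2 x) -> ssum g = Fin a -> has_sum gt (a - K1 + K2).
Proof.
  intros Ngt N1 N2 H1 H2 E Hs.
  set (gp := fun x => Rmax (g x) 0). set (gn := fun x => Rmax (- g x) 0).
  assert (Egp : forall x, gt x + gn x + k1 x = gp x + k2 x).
  { intros x. unfold gp, gn. rewrite E. unfold Rmax.
    destruct (Rle_dec _ 0), (Rle_dec _ 0); lra. }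
  assert (Ngp : nonneg gp) by (intros x; apply Rmax_r).
  assert (Ngn : nonneg gn) by (intros x; apply Rmax_r).
  assert (Hgn : forall x, gn x <= k2 x).
  { intros x. unfold gn. rewrite E. specialize (Ngt x). specialize (N1 x). specialize (N2 x).
    apply Rmax_lub; lra. }
  destruct (has_sum_compare gn k2 K2 Hgn H2) as [n Hn].
  unfold ssum in Hs. fold gp gn in Hs. rewrite (has_sum_sumER gn n Hn) in Hs.
  destruct (sumER_cases gp) as [[p [Hp Ep]]|Ep]; rewrite Ep in Hs; [|discriminate].
  injection Hs as <-.
  assert (Hpk : has_sum (fun x => gp x + k2 x) (p + K2)) by now apply has_sum_plus.
  assert (Hgt : forall x, gt x <= gp x + k2 x).
  { intros x. specialize (Ngn x). specialize (N1 x). specialize (Egp x). lra. }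
  destruct (has_sum_compare gt _ _ Hgt Hpk) as [t Ht].
  assert (Hsum : has_sum (fun x => gt x + gn x + k1 x) (t + n + K1)).
  { apply has_sum_plus; auto; [intros x; specialize (Ngt x); specialize (Ngn x); lra|].
    now apply has_sum_plus. }
  pose proof (has_sum_unique _ _ _ (has_sum_ext _ _ _ Egp Hsum) Hpk).
  now replace (p - n - K1 + K2) with t by lra.
Qed.

Definition has_affine_minorant (phi : R -> R) : Prop :=
  exists al be, forall t, 0 < t -> al + be * t <= phi t.

Lemma nonneg_has_affine_minorant (phi : R -> R) :
  (forall t, 0 < t -> 0 <= phi t) -> has_affine_minorant phi.
Proof. intros H. exists 0, 0. intros t Ht. specialize (H t Ht). lra. Qed.

(* Subtracting an affine minorant makes every term of the divergence nonnegative; since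
   [P] and [Q] sum to one, this shifts [D_phi] by [al + be]. *)
Lemma Df_sub_affine_has_sum {T : Type} (phi : R -> R) (P Q : T -> R) al be a :
  (forall x, 0 < P x) -> (forall x, 0 < Q x) -> has_sum P 1 -> has_sum Q 1 ->
  (forall t, 0 < t -> al + be * t <= phi t) -> Df phi P Q = Fin a ->
  has_sum (fun x => Q x * (phi (P x / Q x) - al - be * (P x / Q x))) (a - al - be).
Proof.
  intros HP HQ SP SQ Hb HD.
  assert (NP : nonneg P) by (intros x; now apply Rlt_le).
  assert (NQ : nonneg Q) by (intros x; now apply Rlt_le).
  assert (Hmix : forall c d, 0 <= c -> 0 <= d -> has_sum (fun x => c * Q x + d * P x) (c + d)).
  { intros c d Hc Hd. replace (c + d) with (c * 1 + d * 1) by ring.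
    apply has_sum_plus; try (apply has_sum_scal; auto);
      intros x; apply Rmult_le_pos; auto. }
  pose proof (Rle_abs al). pose proof (Rle_abs be).
  pose proof (Rabs_pos al). pose proof (Rabs_pos be).
  replace (a - al - be) with (a - (Rabs al + Rabs be) + ((Rabs al - al) + (Rabs be - be))) by ring.
  apply (ssum_shift_has_sum (fun x => Q x * phi (P x / Q x)) _
    (fun x => Rabs al * Q x + Rabs be * P x) (fun x => (Rabs al - al) * Q x + (Rabs be - be) * P x)).
  - intros x. apply Rmult_le_pos; [apply NQ|].
    specialize (Hb (P x / Q x) (Rdiv_lt_0_compat _ _ (HP x) (HQ x))). lra.
  - intros x. specialize (NP x). specialize (NQ x). nra.
  - intros x. specialize (NP x). specialize (NQ x). nra.
  - apply Hmix; lra.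
  - apply Hmix; lra.
  - intros x. specialize (HQ x). field. lra.
  - exact HD.
Qed.

(** * Channels *)

Lemma pmf_has_sum {T : Type} (P : T -> R) : pmf P -> nonneg P /\ has_sum P 1.
Proof. intros [H1 H2]. split; [exact H1|]. now apply sumER_has_sum. Qed.

Section Push.
Context {X Y : Type} (P : X -> R) (W : X -> Y -> R).
Hypotheses (NP : nonneg P) (SP : has_sum P 1) (HW : stochastic W).

Lemma stochastic_row_has_sum x : has_sum (W x) 1.
Proof. apply sumER_has_sum, HW. Qed.

Lemma push_has_sum y : has_sum (fun x => P x * W x y) (push P W y).
Proof.
  assert (Hle : forall x, P x * W x y <= P x).
  { intros x. pose proof (has_sum_term_le _ _ y (stochastic_row_has_sum x)).
    pose proof (NP x). pose proof (proj1 HW x y). nra. }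
  destruct (has_sum_compare _ _ _ Hle SP) as [s Hs].
  unfold push. now rewrite (has_sum_sumER _ _ Hs).
Qed.

Lemma push_total : has_sum (push P W) 1.
Proof.
  apply (has_sum_swap (fun x y => P x * W x y) P 1 (push P W)); auto using push_has_sum.
  - intros x y. apply Rmult_le_pos; [apply NP|apply HW].
  - intros x. pose proof (has_sum_scal _ _ (P x) (NP x) (stochastic_row_has_sum x)) as K.
    now rewrite Rmult_1_r in K.
Qed.

Lemma push_pos y : (forall x, 0 < P x) -> (exists x, 0 < W x y) -> 0 < push P W y.
Proof.
  intros HP [x Hx]. pose proof (has_sum_term_le _ _ x (push_has_sum y)).
  simpl in *. specialize (HP x). nra.
Qed.

End Push.

Lemma push_scal_le {X Y : Type} (P Q : X -> R) (W : X -> Y -> R) a b y :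
  nonneg P -> nonneg Q -> has_sum P 1 -> has_sum Q 1 -> stochastic W -> 0 <= a -> 0 <= b ->
  (forall x, a * P x <= b * Q x) -> a * push P W y <= b * push Q W y.
Proof.
  intros NP NQ SP SQ HW Ha Hb H.
  apply (has_sum_scal_le (fun x => P x * W x y) (fun x => Q x * W x y)); auto using push_has_sum.
  intros x. pose proof (proj1 HW x y). specialize (H x). nra.
Qed.

(** * The interval [I] and the data-processing comparison *)

Section Interval.
Context {T : Type} (P Q : T -> R).

Lemma intI_pos t : intI P Q t -> 0 < t.
Proof. now intros [H _]. Qed.

Lemma intI_between u v t : intI P Q u -> intI P Q v -> u <= t <= v -> intI P Q t.
Proof.
  intros [Hu0 [Hu1 Hu2]] [Hv0 [Hv1 Hv2]] Ht. split; [lra|split].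
  - intros m Hm. specialize (Hu1 m Hm). lra.
  - intros M HM. specialize (Hv2 M HM). lra.
Qed.

Lemma intI_ratio x : 0 < P x -> 0 < Q x -> intI P Q (P x / Q x).
Proof. intros HP HQ. split; [now apply Rdiv_lt_0_compat|split]; auto. Qed.

End Interval.

Definition breg (phi sg : R -> R) (v u : R) : R := phi v - phi u - sg u * (v - u).

Section DataProcessing.
Context {X Y : Type} (P Q : X -> R) (W : X -> Y -> R).
Hypotheses (HP : forall x, 0 < P x) (HQ : forall x, 0 < Q x)
  (SP : has_sum P 1) (SQ : has_sum Q 1) (HW : stochastic W) (HWy : forall y, exists x, 0 < W x y).

Let NP : nonneg P. Proof. intros x. now apply Rlt_le. Qed.
Let NQ : nonneg Q. Proof. intros x. now apply Rlt_le. Qed.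
Let NW x y : 0 <= W x y. Proof. apply HW. Qed.

Lemma intI_one : intI P Q 1.
Proof.
  split; [lra|split].
  - intros m Hm. destruct (Rle_lt_dec m 0); [lra|].
    enough (m * 1 <= 1 * 1) by lra.
    apply (has_sum_scal_le Q P); auto; [lra|lra|].
    intros x. rewrite Rmult_1_l. now apply Rle_div_iff.
  - intros M HM. destruct (has_sum_inhabited Q 1 SQ ltac:(lra)) as [x0].
    assert (0 <= M) by (specialize (HM x0); pose proof (Rdiv_lt_0_compat _ _ (HP x0) (HQ x0)); lra).
    enough (1 * 1 <= M * 1) by lra.
    apply (has_sum_scal_le P Q); auto; [lra|].
    intros x. rewrite Rmult_1_l. now apply Rdiv_le_iff.
Qed.

Lemma intI_push_ratio y : intI P Q (push P W y / push Q W y).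
Proof.
  pose proof (push_pos P W NP SP HW y HP (HWy y)) as PYp.
  pose proof (push_pos Q W NQ SQ HW y HQ (HWy y)) as QYp.
  split; [now apply Rdiv_lt_0_compat|split].
  - intros m Hm. destruct (Rle_lt_dec m 0). { pose proof (Rdiv_lt_0_compat _ _ PYp QYp). lra. }
    apply Rle_div_iff; [exact QYp|]. rewrite <- (Rmult_1_l (push P W y)).
    apply push_scal_le; auto; [lra|lra|].
    intros x. rewrite Rmult_1_l. now apply Rle_div_iff.
  - intros M HM. destruct (HWy y) as [x0 _].
    assert (0 <= M) by (specialize (HM x0); pose proof (Rdiv_lt_0_compat _ _ (HP x0) (HQ x0)); lra).
    apply Rdiv_le_iff; [exact QYp|]. rewrite <- (Rmult_1_l (push P W y)).
    apply push_scal_le; auto; [lra|].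
    intros x. rewrite Rmult_1_l. now apply Rdiv_le_iff.
Qed.

Lemma has_sum_disintegrate (psi : X -> R) A : nonneg psi -> has_sum (fun x => Q x * psi x) A ->
  exists C : Y -> R, (forall y, has_sum (fun x => Q x * psi x * W x y) (C y)) /\ has_sum C A.
Proof.
  intros Np HA.
  assert (Hrow : forall x, has_sum (fun y => Q x * psi x * W x y) (Q x * psi x)).
  { intros x. pose proof (has_sum_scal _ _ (Q x * psi x) ltac:(specialize (NQ x); specialize (Np x); nra)
      (stochastic_row_has_sum W HW x)) as K.
    now rewrite Rmult_1_r in K. }
  destruct (choice _ (has_sum_swap_exists _ _ A Hrow HA)) as [C HC].
  exists C. split; [exact HC|].
  apply (has_sum_swap (fun x y => Q x * psi x * W x y) (fun x => Q x * psi x) A C); auto.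
  intros x y. specialize (NQ x). specialize (Np x). specialize (NW x y). apply Rmult_le_pos; nra.
Qed.

Section Comparison.
Variables (phi1 phi2 sg1 sg2 : R -> R) (k1 k2 : R).
Hypothesis Hbreg : forall u v, intI P Q u -> intI P Q v ->
  k2 * breg phi2 sg2 v u <= k1 * breg phi1 sg1 v u.

(* Within the fibre over [y] the linear terms of the Bregman residuals at [s = P_Y(y)/Q_Y(y)]
   cancel, because [sum_x Q(x) W(y|x) (P(x)/Q(x) - s) = P_Y(y) - s Q_Y(y) = 0]. *)
Lemma breg_fibre_ineq y c1 c2 :
  (forall t, 0 < t -> 0 <= phi1 t) -> (forall t, 0 < t -> 0 <= phi2 t) ->
  has_sum (fun x => Q x * phi1 (P x / Q x) * W x y) c1 ->
  has_sum (fun x => Q x * phi2 (P x / Q x) * W x y) c2 ->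
  k1 * (push Q W y * phi1 (push P W y / push Q W y)) - k2 * (push Q W y * phi2 (push P W y / push Q W y))
    <= k1 * c1 - k2 * c2.
Proof.
  intros N1 N2 H1 H2.
  pose proof (push_pos Q W NQ SQ HW y HQ (HWy y)) as QYp.
  set (s := push P W y / push Q W y).
  assert (Is : intI P Q s) by apply intI_push_ratio.
  set (L := k1 * sg1 s - k2 * sg2 s).
  set (K := - k1 * phi1 s + k2 * phi2 s + L * s).
  assert (E : k1 * c1 + - k2 * c2 + K * push Q W y + - L * push P W y =
              k1 * c1 - k2 * c2 - k1 * (push Q W y * phi1 s) + k2 * (push Q W y * phi2 s)).
  { unfold K, s. field. lra. }
  enough (0 <= k1 * c1 + - k2 * c2 + K * push Q W y + - L * push P W y) by lra.
  apply (has_sum_lin4_nonneg (fun x => Q x * phi1 (P x / Q x) * W x y)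
    (fun x => Q x * phi2 (P x / Q x) * W x y) (fun x => Q x * W x y) (fun x => P x * W x y));
    auto using push_has_sum.
  - intros x. pose proof (N1 _ (Rdiv_lt_0_compat _ _ (HP x) (HQ x))). specialize (NQ x). specialize (NW x y).
    apply Rmult_le_pos; [apply Rmult_le_pos|]; auto.
  - intros x. pose proof (N2 _ (Rdiv_lt_0_compat _ _ (HP x) (HQ x))). specialize (NQ x). specialize (NW x y).
    apply Rmult_le_pos; [apply Rmult_le_pos|]; auto.
  - intros x. apply Rmult_le_pos; auto.
  - intros x. apply Rmult_le_pos; auto.
  - intros l _. rewrite <- !lsum_scal, <- !lsum_plus. apply lsum_nonneg. intros x.
    pose proof (HQ x) as Qx. pose proof (NW x y) as Wxy.
    set (r := P x / Q x).
    assert (Pr : P x = Q x * r) by (unfold r; field; lra). rewrite Pr.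
    pose proof (Hbreg s r Is (intI_ratio P Q x (HP x) (HQ x))) as Hb. unfold breg in Hb.
    assert (0 <= Q x * W x y * (k1 * (phi1 r - phi1 s - sg1 s * (r - s)) -
                                k2 * (phi2 r - phi2 s - sg2 s * (r - s)))).
    { apply Rmult_le_pos; [apply Rmult_le_pos; lra|lra]. }
    unfold K, L. nra.
Qed.

Lemma divergence_drop_compare_nonneg A1 A2 B1 B2 :
  (forall t, 0 < t -> 0 <= phi1 t) -> (forall t, 0 < t -> 0 <= phi2 t) ->
  has_sum (fun x => Q x * phi1 (P x / Q x)) A1 ->
  has_sum (fun x => Q x * phi2 (P x / Q x)) A2 ->
  has_sum (fun y => push Q W y * phi1 (push P W y / push Q W y)) B1 ->
  has_sum (fun y => push Q W y * phi2 (push P W y / push Q W y)) B2 ->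
  k2 * (A2 - B2) <= k1 * (A1 - B1).
Proof.
  intros N1 N2 HA1 HA2 HB1 HB2.
  assert (Nr : forall phi, (forall t, 0 < t -> 0 <= phi t) -> nonneg (fun x => phi (P x / Q x))).
  { intros phi N x. apply N, Rdiv_lt_0_compat; auto. }
  assert (Ny : forall phi, (forall t, 0 < t -> 0 <= phi t) ->
            nonneg (fun y => push Q W y * phi (push P W y / push Q W y))).
  { intros phi N y. pose proof (push_pos Q W NQ SQ HW y HQ (HWy y)).
    pose proof (push_pos P W NP SP HW y HP (HWy y)).
    apply Rmult_le_pos; [lra|]. apply N, Rdiv_lt_0_compat; auto. }
  destruct (has_sum_disintegrate _ A1 (Nr _ N1) HA1) as [C1 [HC1 SC1]].
  destruct (has_sum_disintegrate _ A2 (Nr _ N2) HA2) as [C2 [HC2 SC2]].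
  enough (0 <= k1 * A1 + - k2 * A2 + - k1 * B1 + k2 * B2) by lra.
  apply (has_sum_lin4_nonneg C1 C2 _ _ A1 A2 B1 B2 k1 (- k2) (- k1) k2
    (fun y => has_sum_nonneg _ _ (HC1 y)) (fun y => has_sum_nonneg _ _ (HC2 y)) (Ny _ N1) (Ny _ N2)
    SC1 SC2 HB1 HB2).
  intros l _. rewrite <- !lsum_scal, <- !lsum_plus. apply lsum_nonneg. intros y.
  pose proof (breg_fibre_ineq y (C1 y) (C2 y) N1 N2 (HC1 y) (HC2 y)). lra.
Qed.

End Comparison.

Lemma breg_sub_affine phi sg al be v u :
  breg (fun t => phi t - al - be * t) (fun t => sg t - be) v u = breg phi sg v u.
Proof. unfold breg. ring. Qed.

(* The affine minorants make the a priori signed series absolutely summable. *)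
Lemma divergence_drop_compare phi1 phi2 sg1 sg2 k1 k2 a1 a2 b1 b2 :
  has_affine_minorant phi1 -> has_affine_minorant phi2 ->
  (forall u v, intI P Q u -> intI P Q v -> k2 * breg phi2 sg2 v u <= k1 * breg phi1 sg1 v u) ->
  Df phi1 P Q = Fin a1 -> Df phi2 P Q = Fin a2 ->
  Df phi1 (push P W) (push Q W) = Fin b1 -> Df phi2 (push P W) (push Q W) = Fin b2 ->
  k2 * (a2 - b2) <= k1 * (a1 - b1).
Proof.
  intros [al1 [be1 L1]] [al2 [be2 L2]] Hbreg D1 D2 E1 E2.
  assert (PYp : forall y, 0 < push P W y) by (intros y; apply push_pos; auto).
  assert (QYp : forall y, 0 < push Q W y) by (intros y; apply push_pos; auto).
  pose proof (push_total P W NP SP HW) as SPY. pose proof (push_total Q W NQ SQ HW) as SQY.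
  replace (a2 - b2) with ((a2 - al2 - be2) - (b2 - al2 - be2)) by ring.
  replace (a1 - b1) with ((a1 - al1 - be1) - (b1 - al1 - be1)) by ring.
  apply (divergence_drop_compare_nonneg (fun t => phi1 t - al1 - be1 * t) (fun t => phi2 t - al2 - be2 * t)
    (fun t => sg1 t - be1) (fun t => sg2 t - be2)); try (intros t Ht; specialize (L1 t Ht);
    specialize (L2 t Ht); lra); try (apply Df_sub_affine_has_sum; auto).
  intros u v Iu Iv. rewrite !breg_sub_affine. auto.
Qed.

End DataProcessing.

(** * Convex functions on the positive half-line *)

Definition is_interval (J : R -> Prop) : Prop := forall u v t, J u -> J v -> u <= t <= v -> J t.

Section Convex.
Variable f : R -> R.
Hypothesis Hc : convex_pos f.

Lemma convex_pos_three_point x y z : 0 < x -> x < y -> y < z ->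
  (z - x) * f y <= (z - y) * f x + (y - x) * f z.
Proof.
  intros Hx Hxy Hyz. set (t := (z - y) / (z - x)).
  assert (Ht : 0 <= t <= 1).
  { unfold t. split; [apply Rmult_le_pos; [lra|left; apply Rinv_0_lt_compat; lra]|].
    apply Rdiv_le_iff; lra. }
  specialize (Hc x z t Hx ltac:(lra) Ht).
  replace (t * x + (1 - t) * z) with y in Hc by (unfold t; field; lra).
  apply (Rmult_le_compat_l (z - x)) in Hc; [|lra].
  replace ((z - x) * (t * f x + (1 - t) * f z)) with ((z - y) * f x + (y - x) * f z) in Hc
    by (unfold t; field; lra).
  exact Hc.
Qed.

Lemma convex_pos_slope_le_secant x y z : 0 < x -> x < y -> y < z ->
  (f y - f x) / (y - x) <= (f z - f x) / (z - x).
Proof.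
  intros Hx Hxy Hyz. pose proof (convex_pos_three_point x y z Hx Hxy Hyz).
  apply Rdiv_le_div_iff; lra.
Qed.

Lemma convex_pos_slope_le x y z : 0 < x -> x < y -> y < z ->
  (f y - f x) / (y - x) <= (f z - f y) / (z - y).
Proof.
  intros Hx Hxy Hyz. pose proof (convex_pos_three_point x y z Hx Hxy Hyz).
  apply Rdiv_le_div_iff; lra.
Qed.

Lemma rderiv_le_slope t a h : 0 < t -> is_rderiv f t a -> 0 < h -> a <= (f (t + h) - f t) / h.
Proof.
  intros Ht Hd Hh. apply Rnot_lt_le. intros Hlt.
  destruct (Hd (a - (f (t + h) - f t) / h) ltac:(lra)) as [d [Hd0 Hdd]].
  set (h' := Rmin h (d / 2)).
  assert (Hh' : 0 < h' <= h) by (unfold h'; split; [apply Rmin_glb_lt; lra|apply Rmin_l]).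
  assert (Hh'd : h' < d) by (unfold h'; pose proof (Rmin_r h (d / 2)); lra).
  specialize (Hdd h' (conj (proj1 Hh') Hh'd)). apply Rabs_def2 in Hdd.
  assert ((f (t + h') - f t) / h' <= (f (t + h) - f t) / h).
  { destruct (Req_dec h' h) as [->|ne]; [lra|].
    pose proof (convex_pos_slope_le_secant t (t + h') (t + h) Ht ltac:(lra) ltac:(lra)) as S.
    now replace (t + h' - t) with h' in S by ring; replace (t + h - t) with h in S by ring. }
  lra.
Qed.

Lemma rderiv_ge_slope_left t a h : 0 < t -> is_rderiv f t a -> 0 < h < t ->
  (f t - f (t - h)) / h <= a.
Proof.
  intros Ht Hd Hh. apply Rnot_lt_le. intros Hlt.
  destruct (Hd ((f t - f (t - h)) / h - a) ltac:(lra)) as [d [Hd0 Hdd]].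
  specialize (Hdd (d / 2) ltac:(lra)). apply Rabs_def2 in Hdd.
  pose proof (convex_pos_slope_le (t - h) t (t + d / 2) ltac:(lra) ltac:(lra) ltac:(lra)) as S.
  replace (t - (t - h)) with h in S by ring. replace (t + d / 2 - t) with (d / 2) in S by ring.
  lra.
Qed.

Lemma rderiv_secant_right t a h : 0 < t -> is_rderiv f t a -> 0 < h -> a * h <= f (t + h) - f t.
Proof. intros Ht Hd Hh. apply Rle_div_iff; auto. now apply rderiv_le_slope. Qed.

Lemma rderiv_secant_left t a h : 0 < t -> is_rderiv f t a -> 0 < h < t -> f t - f (t - h) <= a * h.
Proof. intros Ht Hd Hh. apply Rdiv_le_iff; [lra|]. now apply rderiv_ge_slope_left. Qed.

(* The right derivative is the infimum of the right difference quotients, which are nondecreasing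
   in the step and bounded below by any left difference quotient. *)
Lemma rderiv_exists t : 0 < t -> exists a, is_rderiv f t a.
Proof.
  intros Ht. set (E := fun q => exists h, 0 < h /\ q = (f (t + h) - f t) / h).
  set (L := (f t - f (t - t / 2)) / (t / 2)).
  assert (Hlb : forall q, E q -> L <= q).
  { intros q [h [Hh ->]]. unfold L.
    pose proof (convex_pos_slope_le (t - t / 2) t (t + h) ltac:(lra) ltac:(lra) ltac:(lra)) as S.
    now replace (t - (t - t / 2)) with (t / 2) in S by ring; replace (t + h - t) with h in S by ring. }
  assert (Hne : exists q, E q) by (exists ((f (t + 1) - f t) / 1); exists 1; split; [lra|auto]).
  exists (Rinf E). intros eps He.
  assert (Hex : exists h0, 0 < h0 /\ (f (t + h0) - f t) / h0 < Rinf E + eps).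
  { apply NNPP. intros C. enough (Rinf E + eps <= Rinf E) by lra.
    apply Rinf_greatest; auto. intros q [h [Hh ->]]. apply Rnot_lt_le. intros Hq. apply C. eauto. }
  destruct Hex as [h0 [Hh0 Hq0]]. exists h0. split; [exact Hh0|].
  intros h [Hh Hhh].
  assert (Rinf E <= (f (t + h) - f t) / h) by (apply (Rinf_lb E _ L); auto; exists h; auto).
  assert ((f (t + h) - f t) / h <= (f (t + h0) - f t) / h0).
  { pose proof (convex_pos_slope_le_secant t (t + h) (t + h0) Ht ltac:(lra) ltac:(lra)) as S.
    now replace (t + h - t) with h in S by ring; replace (t + h0 - t) with h0 in S by ring. }
  apply Rabs_def1; lra.
Qed.

Lemma rderiv_supporting_line s a t : 0 < s -> is_rderiv f s a -> 0 < t -> f s + a * (t - s) <= f t.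
Proof.
  intros Hs Hd Ht. destruct (Rtotal_order t s) as [lt|[->|gt]].
  - pose proof (rderiv_secant_left s a (s - t) Hs Hd ltac:(lra)).
    replace (s - (s - t)) with t in H by ring. lra.
  - lra.
  - pose proof (rderiv_secant_right s a (t - s) Hs Hd ltac:(lra)).
    replace (s + (t - s)) with t in H by ring. lra.
Qed.

Lemma convex_pos_has_affine_minorant : has_affine_minorant f.
Proof.
  destruct (rderiv_exists 1 ltac:(lra)) as [a Ha].
  exists (f 1 - a), a. intros t Ht. pose proof (rderiv_supporting_line 1 a t ltac:(lra) Ha Ht). lra.
Qed.

Section SlopeGap.
Variables (I : R -> Prop) (sg : R -> R) (c : R).
Hypotheses (Iint : is_interval I) (Ipos : forall t, I t -> 0 < t)
  (Hd : forall t, I t -> is_rderiv f t (sg t))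
  (Hgap : forall u v, I u -> I v -> u < v -> sg v - sg u >= 2 * c * (v - u)).

(* Summing the secant bounds over [n] equal steps from [u] towards [v]; the slope gap
   contributes [2 c] times an arithmetic progression. *)
Lemma breg_slope_gap_right u v n : I u -> I v -> u < v -> (1 <= n)%nat ->
  c * (v - u) ^ 2 - c * (v - u) ^ 2 / INR n <= breg f sg v u.
Proof.
  intros Iu Iv Huv Hn. unfold breg.
  assert (Hn0 : 0 < INR n) by (apply lt_0_INR; lia).
  set (h := (v - u) / INR n).
  assert (Hh : 0 < h) by (unfold h; apply Rdiv_lt_0_compat; lra).
  assert (Hnh : INR n * h = v - u) by (unfold h; field; lra).
  assert (K : forall k, (k <= n)%nat ->
    sg u * (INR k * h) + c * h ^ 2 * INR k * (INR k - 1) <= f (u + INR k * h) - f u).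
  { induction k as [|k IH]; intros Hk.
    - simpl. replace (u + 0 * h) with u by ring. lra.
    - specialize (IH ltac:(lia)). set (t := u + INR k * h).
      assert (Hkn : INR k * h <= v - u).
      { rewrite <- Hnh. apply Rmult_le_compat_r; [lra|]. apply le_INR; lia. }
      assert (Hk0 : 0 <= INR k * h) by (apply Rmult_le_pos; [apply pos_INR|lra]).
      assert (It : I t) by (apply (Iint u v); auto; unfold t; lra).
      pose proof (rderiv_secant_right t (sg t) h (Ipos t It) (Hd t It) Hh) as Sec.
      assert (Hsg : sg u + 2 * c * (INR k * h) <= sg t).
      { destruct (Rle_lt_dec (INR k * h) 0).
        - unfold t. replace (INR k * h) with 0 by lra. rewrite Rplus_0_r. lra.
        - specialize (Hgap u t Iu It ltac:(unfold t; lra)). unfold t in Hgap at 2. lra. }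
      assert ((sg u + 2 * c * (INR k * h)) * h <= sg t * h) by (apply Rmult_le_compat_r; lra).
      replace (u + INR (S k) * h) with (t + h) by (unfold t; rewrite S_INR; ring).
      rewrite S_INR. unfold t in *. nra. }
  specialize (K n (le_n n)). rewrite Hnh in K. replace (u + (v - u)) with v in K by ring.
  replace (c * (v - u) ^ 2 - c * (v - u) ^ 2 / INR n) with (c * h ^ 2 * INR n * (INR n - 1))
    by (unfold h; field; lra).
  lra.
Qed.

Lemma breg_slope_gap_left u v n : I u -> I v -> v < u -> (1 <= n)%nat ->
  c * (v - u) ^ 2 - c * (v - u) ^ 2 / INR n <= breg f sg v u.
Proof.
  intros Iu Iv Huv Hn. unfold breg.
  assert (Hn0 : 0 < INR n) by (apply lt_0_INR; lia).
  set (h := (u - v) / INR n).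
  assert (Hh : 0 < h) by (unfold h; apply Rdiv_lt_0_compat; lra).
  assert (Hnh : INR n * h = u - v) by (unfold h; field; lra).
  assert (Hv0 : 0 < v) by auto.
  assert (K : forall k, (k <= n)%nat ->
    f u - f (u - INR k * h) <= sg u * (INR k * h) - c * h ^ 2 * INR k * (INR k - 1)).
  { induction k as [|k IH]; intros Hk.
    - simpl. replace (u - 0 * h) with u by ring. lra.
    - specialize (IH ltac:(lia)). set (t := u - INR k * h).
      assert (Hkn : INR (S k) * h <= u - v).
      { rewrite <- Hnh. apply Rmult_le_compat_r; [lra|]. apply le_INR; lia. }
      rewrite S_INR in Hkn.
      assert (Hk0 : 0 <= INR k * h) by (apply Rmult_le_pos; [apply pos_INR|lra]).
      assert (It : I t) by (apply (Iint v u); auto; unfold t; lra).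
      pose proof (rderiv_secant_left t (sg t) h (Ipos t It) (Hd t It) ltac:(unfold t; lra)) as Sec.
      assert (Hsg : sg t <= sg u - 2 * c * (INR k * h)).
      { destruct (Rle_lt_dec (INR k * h) 0).
        - unfold t. replace (INR k * h) with 0 by lra. rewrite Rminus_0_r. lra.
        - specialize (Hgap t u It Iu ltac:(unfold t; lra)). unfold t in Hgap at 2. lra. }
      assert (sg t * h <= (sg u - 2 * c * (INR k * h)) * h) by (apply Rmult_le_compat_r; lra).
      replace (u - INR (S k) * h) with (t - h) by (unfold t; rewrite S_INR; ring).
      rewrite S_INR. unfold t in *. nra. }
  specialize (K n (le_n n)). rewrite Hnh in K. replace (u - (u - v)) with v in K by ring.
  replace (c * (v - u) ^ 2 - c * (v - u) ^ 2 / INR n) with (c * h ^ 2 * INR n * (INR n - 1))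
    by (unfold h; field; lra).
  lra.
Qed.

Lemma breg_slope_gap u v : 0 <= c -> I u -> I v -> c * (v - u) ^ 2 <= breg f sg v u.
Proof.
  intros Hc0 Iu Iv. apply le_of_le_sub_div_INR; [apply Rmult_le_pos; [lra|apply pow2_ge_0]|].
  intros n Hn. destruct (Rtotal_order u v) as [lt|[<-|gt]].
  - now apply breg_slope_gap_right.
  - unfold breg. replace (u - u) with 0 by ring.
    assert (0 < INR n) by (apply lt_0_INR; lia).
    replace (c * 0 ^ 2 - c * 0 ^ 2 / INR n) with 0 by (field; lra). lra.
  - now apply breg_slope_gap_left.
Qed.

End SlopeGap.
End Convex.

(** * Differentiable functions *)

Lemma rderiv_unique (f : R -> R) t a b : is_rderiv f t a -> is_rderiv f t b -> a = b.
Proof.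
  intros Ha Hb. apply NNPP. intros ne.
  set (eps := Rabs (a - b) / 2).
  assert (He : 0 < eps) by (unfold eps; apply Rdiv_lt_0_compat; [apply Rabs_pos_lt; lra|lra]).
  destruct (Ha eps He) as [d1 [Hd1 H1]]. destruct (Hb eps He) as [d2 [Hd2 H2]].
  set (h := Rmin d1 d2 / 2).
  assert (0 < h < d1 /\ h < d2).
  { unfold h. pose proof (Rmin_l d1 d2). pose proof (Rmin_r d1 d2).
    assert (0 < Rmin d1 d2) by (apply Rmin_glb_lt; auto). lra. }
  specialize (H1 h ltac:(lra)). specialize (H2 h ltac:(lra)).
  pose proof (Rabs_triang ((f (t + h) - f t) / h - b) (a - (f (t + h) - f t) / h)) as Tr.
  replace ((f (t + h) - f t) / h - b + (a - (f (t + h) - f t) / h)) with (a - b) in Tr by ring.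
  rewrite Rabs_minus_sym in H1. unfold eps in *. lra.
Qed.

Lemma derivable_pt_lim_rderiv (f : R -> R) t l : derivable_pt_lim f t l -> is_rderiv f t l.
Proof.
  intros H eps He. destruct (H eps He) as [d Hd]. exists d. split; [apply cond_pos|].
  intros h [Hh Hhd]. apply Hd; [lra|]. rewrite Rabs_right; lra.
Qed.

Lemma derivable_pt_lim_ge_right (g : R -> R) t l m e : derivable_pt_lim g t l -> 0 < e ->
  (forall h, 0 < h < e -> m <= (g (t + h) - g t) / h) -> m <= l.
Proof.
  intros Hd He Hq. apply Rnot_lt_le. intros Hlt.
  destruct (Hd (m - l) ltac:(lra)) as [d Hdd].
  set (h := Rmin d e / 2).
  assert (0 < Rmin d e) by (apply Rmin_glb_lt; [apply cond_pos|auto]).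
  assert (Hh : 0 < h < e) by (unfold h; pose proof (Rmin_r d e); lra).
  assert (Hhd : Rabs h < d) by (rewrite Rabs_right by lra; unfold h; pose proof (Rmin_l d e); lra).
  specialize (Hdd h ltac:(lra) Hhd). specialize (Hq h Hh). apply Rabs_def2 in Hdd. lra.
Qed.

Lemma derivable_pt_lim_ge_left (g : R -> R) t l m e : derivable_pt_lim g t l -> 0 < e ->
  (forall h, - e < h < 0 -> m <= (g (t + h) - g t) / h) -> m <= l.
Proof.
  intros Hd He Hq. apply Rnot_lt_le. intros Hlt.
  destruct (Hd (m - l) ltac:(lra)) as [d Hdd].
  set (h := - (Rmin d e / 2)).
  assert (0 < Rmin d e) by (apply Rmin_glb_lt; [apply cond_pos|auto]).
  assert (Hh : - e < h < 0) by (unfold h; pose proof (Rmin_r d e); lra).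
  assert (Hhd : Rabs h < d) by (rewrite Rabs_left by lra; unfold h; pose proof (Rmin_l d e); lra).
  specialize (Hdd h ltac:(lra) Hhd). specialize (Hq h Hh). apply Rabs_def2 in Hdd. lra.
Qed.

Lemma continuity_pt_eps (g : R -> R) c : continuity_pt g c ->
  forall eps, 0 < eps -> exists del, 0 < del /\ forall t, Rabs (t - c) < del -> Rabs (g t - g c) < eps.
Proof.
  intros H eps He. destruct (H eps He) as [del [Hdel Hx]]. exists del. split; [exact Hdel|].
  intros t Ht. destruct (Req_dec t c) as [->|ne].
  - now rewrite Rminus_diag, Rabs_R0.
  - apply (Hx t). split; [split|]; auto; exact I.
Qed.

Lemma convex_pos_deriv_mono (f f1 : R -> R) s1 s2 : convex_pos f -> 0 < s1 -> s1 < s2 ->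
  derivable_pt_lim f s1 (f1 s1) -> derivable_pt_lim f s2 (f1 s2) -> f1 s1 <= f1 s2.
Proof.
  intros Hc H1 H12 D1 D2.
  pose proof (rderiv_le_slope f Hc s1 (f1 s1) (s2 - s1) H1 (derivable_pt_lim_rderiv _ _ _ D1) ltac:(lra)).
  pose proof (rderiv_ge_slope_left f Hc s2 (f1 s2) (s2 - s1) ltac:(lra) (derivable_pt_lim_rderiv _ _ _ D2)
    ltac:(lra)).
  replace (s1 + (s2 - s1)) with s2 in H by ring. replace (s2 - (s2 - s1)) with s1 in H0 by ring.
  lra.
Qed.

Lemma convex_pos_deriv2_nonneg (f f1 f2 : R -> R) t : convex_pos f -> 0 < t ->
  (exists d, 0 < d /\ forall s, Rabs (s - t) < d -> derivable_pt_lim f s (f1 s)) ->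
  derivable_pt_lim f1 t (f2 t) -> 0 <= f2 t.
Proof.
  intros Hc Ht [d [Hd Hs]] H2.
  apply (derivable_pt_lim_ge_right f1 t (f2 t) 0 (Rmin d t) H2); [now apply Rmin_glb_lt|].
  intros h Hh. pose proof (Rmin_l d t). pose proof (Rmin_r d t).
  apply Rle_div_iff; [lra|]. rewrite Rmult_0_l.
  enough (f1 t <= f1 (t + h)) by lra.
  apply (convex_pos_deriv_mono f); auto; try lra; apply Hs.
  - now rewrite Rminus_diag, Rabs_R0.
  - replace (t + h - t) with h by ring. rewrite Rabs_right; lra.
Qed.

Definition deriv2_on (J : R -> Prop) (g g1 g2 : R -> R) : Prop :=
  (forall t, J t -> derivable_pt_lim g t (g1 t)) /\ (forall t, J t -> derivable_pt_lim g1 t (g2 t)).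

Lemma twice_diff_on_deriv2_on (f f2 : R -> R) (J : R -> Prop) :
  twice_diff_on f J f2 -> exists f1, deriv2_on J f f1 f2.
Proof.
  intros [f1 [H1 H2]]. exists f1. split; [|exact H2].
  intros t Jt. destruct (H1 t Jt) as [d [Hd Hs]]. apply Hs. now rewrite Rminus_diag, Rabs_R0.
Qed.

(* Mean value theorem twice: [g1] is nondecreasing on [J], so [g] lies above its tangents. *)
Lemma breg_nonneg_deriv2 (J : R -> Prop) (g g1 g2 : R -> R) :
  is_interval J -> deriv2_on J g g1 g2 -> (forall t, J t -> 0 <= g2 t) ->
  forall u v, J u -> J v -> 0 <= breg g g1 v u.
Proof.
  intros Jc [H1 H2] H3.
  assert (Mono : forall a b, J a -> J b -> a <= b -> g1 a <= g1 b).
  { intros a b Ja Jb Hab. destruct (Req_dec a b) as [->|ne]; [lra|].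
    destruct (MVT_cor2 g1 g2 a b ltac:(lra)) as [c [Hc1 Hc2]].
    { intros c Hc. apply H2, (Jc a b); auto. }
    assert (J c) by (apply (Jc a b); auto; lra).
    specialize (H3 c H). nra. }
  intros u v Ju Jv. unfold breg. destruct (Rtotal_order u v) as [lt|[<-|gt]].
  - destruct (MVT_cor2 g g1 u v lt) as [c [Hc1 Hc2]].
    { intros c Hc. apply H1, (Jc u v); auto. }
    assert (J c) by (apply (Jc u v); auto; lra).
    pose proof (Mono u c Ju H ltac:(lra)). nra.
  - lra.
  - destruct (MVT_cor2 g g1 v u gt) as [c [Hc1 Hc2]].
    { intros c Hc. apply H1, (Jc v u); auto. }
    assert (J c) by (apply (Jc v u); auto; lra).
    pose proof (Mono c u H Ju ltac:(lra)). nra.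
Qed.

Lemma breg_compare_deriv2 (J : R -> Prop) (f f1 f2 p p1 p2 : R -> R) al be :
  is_interval J -> deriv2_on J f f1 f2 -> deriv2_on J p p1 p2 ->
  (forall t, J t -> be * p2 t <= al * f2 t) ->
  forall u v, J u -> J v -> be * breg p p1 v u <= al * breg f f1 v u.
Proof.
  intros Jc [Hf1 Hf2] [Hp1 Hp2] Hle u v Ju Jv.
  assert (0 <= breg (fun t => al * f t - be * p t) (fun t => al * f1 t - be * p1 t) v u).
  { apply (breg_nonneg_deriv2 J _ _ (fun t => al * f2 t - be * p2 t)); auto; [split|].
    - intros t Jt. exact (derivable_pt_lim_minus _ _ _ _ _
        (derivable_pt_lim_scal _ al _ _ (Hf1 t Jt)) (derivable_pt_lim_scal _ be _ _ (Hp1 t Jt))).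
    - intros t Jt. exact (derivable_pt_lim_minus _ _ _ _ _
        (derivable_pt_lim_scal _ al _ _ (Hf2 t Jt)) (derivable_pt_lim_scal _ be _ _ (Hp2 t Jt))).
    - intros t Jt. specialize (Hle t Jt). lra. }
  unfold breg in *. lra.
Qed.

(** * Pearson's and Neyman's chi-square *)

Definition pearson (t : R) : R := (t - 1) ^ 2.
Definition neyman (t : R) : R := (1 - t) ^ 2 / t.

Module ChiSquareDerivatives.
Import Coquelicot.Coquelicot.

Lemma pearson_deriv s : derivable_pt_lim pearson s (2 * (s - 1)).
Proof. apply is_derive_Reals. unfold pearson. auto_derive; [auto|ring]. Qed.

Lemma pearson_deriv1 s : derivable_pt_lim (fun t => 2 * (t - 1)) s 2.
Proof. apply is_derive_Reals. auto_derive; [auto|ring]. Qed.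

Lemma neyman_deriv s : 0 < s -> derivable_pt_lim neyman s (1 - 1 / s ^ 2).
Proof. intros Hs. apply is_derive_Reals. unfold neyman. auto_derive; [lra|field; lra]. Qed.

Lemma neyman_deriv1 s : 0 < s -> derivable_pt_lim (fun t => 1 - 1 / t ^ 2) s (2 / s ^ 3).
Proof. intros Hs. apply is_derive_Reals. auto_derive; [intros E; nra|field; lra]. Qed.

Lemma cube_deriv s : derivable_pt_lim (fun t => t ^ 3) s (3 * s ^ 2).
Proof. apply is_derive_Reals. auto_derive; [auto|ring]. Qed.

End ChiSquareDerivatives.
Import ChiSquareDerivatives.

Lemma pearson_deriv2_on J : deriv2_on J pearson (fun t => 2 * (t - 1)) (fun _ => 2).
Proof. split; intros t _; [apply pearson_deriv|apply pearson_deriv1]. Qed.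

Lemma neyman_deriv2_on J : (forall t, J t -> 0 < t) ->
  deriv2_on J neyman (fun t => 1 - 1 / t ^ 2) (fun t => 2 / t ^ 3).
Proof. intros HJ. split; intros t Jt; [apply neyman_deriv|apply neyman_deriv1]; auto. Qed.

Lemma neyman_deriv2_scal k t : 0 < t -> / 2 * k * (2 / t ^ 3) = k / t ^ 3.
Proof. intros Ht. field. lra. Qed.

Lemma pearson_nonneg t : 0 < t -> 0 <= pearson t.
Proof. intros _. apply pow2_ge_0. Qed.

Lemma neyman_nonneg t : 0 < t -> 0 <= neyman t.
Proof. intros Ht. apply Rmult_le_pos; [apply pow2_ge_0|left; now apply Rinv_0_lt_compat]. Qed.

Lemma Df_neyman {T : Type} (P Q : T -> R) : (forall x, 0 < P x) -> (forall x, 0 < Q x) ->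
  Df neyman P Q = chi2 Q P.
Proof.
  intros HP HQ. unfold chi2, Df. f_equal. apply functional_extensionality. intros x.
  specialize (HP x); specialize (HQ x). unfold neyman. field. lra.
Qed.

(** * Bounds on the drop of [D_f] *)

Lemma intI_is_interval {T : Type} (P Q : T -> R) : is_interval (intI P Q).
Proof. intros u v t. apply intI_between. Qed.

Lemma Rinf_img_le (I : R -> Prop) (g : R -> R) t :
  (forall s, I s -> 0 <= g s) -> I t -> Rinf (img I g) <= g t.
Proof. intros Hg It. apply (Rinf_lb _ _ 0); [intros y [s [Is ->]]; auto|now exists t]. Qed.

Lemma Rinf_img_nonneg (I : R -> Prop) (g : R -> R) t0 :
  (forall s, I s -> 0 <= g s) -> I t0 -> 0 <= Rinf (img I g).
Proof. intros Hg I0. apply Rinf_greatest; [now exists (g t0), t0|]. intros y [s [Is ->]]; auto. Qed.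

Lemma Rsup_img_ge (I : R -> Prop) (g : R -> R) t : bound (img I g) -> I t -> g t <= Rsup (img I g).
Proof. intros Hb It. apply Rsup_ub; [exact Hb|now exists t]. Qed.

Section DropBounds.
Context {X Y : Type} (P Q : X -> R) (W : X -> Y -> R).
Hypotheses (HP : forall x, 0 < P x) (HQ : forall x, 0 < Q x)
  (SP : has_sum P 1) (SQ : has_sum Q 1) (HW : stochastic W) (HWy : forall y, exists x, 0 < W x y).

Let PY := push P W.
Let QY := push Q W.

Let HPY y : 0 < PY y.
Proof. apply push_pos; auto. intros x. now apply Rlt_le. Qed.
Let HQY y : 0 < QY y.
Proof. apply push_pos; auto. intros x. now apply Rlt_le. Qed.

Lemma divergence_drop_compare_deriv2 phi1 phi2 d1 d2 dd1 dd2 k1 k2 a1 a2 b1 b2 :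
  has_affine_minorant phi1 -> has_affine_minorant phi2 ->
  deriv2_on (intI P Q) phi1 d1 dd1 -> deriv2_on (intI P Q) phi2 d2 dd2 ->
  (forall t, intI P Q t -> k2 * dd2 t <= k1 * dd1 t) ->
  Df phi1 P Q = Fin a1 -> Df phi2 P Q = Fin a2 -> Df phi1 PY QY = Fin b1 -> Df phi2 PY QY = Fin b2 ->
  k2 * (a2 - b2) <= k1 * (a1 - b1).
Proof.
  intros M1 M2 D1 D2 Hdd. apply (divergence_drop_compare P Q W HP HQ SP SQ HW HWy phi1 phi2 d1 d2); auto.
  apply (breg_compare_deriv2 (intI P Q) phi1 d1 dd1 phi2 d2 dd2); auto using intI_is_interval.
Qed.

Lemma pearson_drop_nonneg d e : chi2 P Q = Fin d -> chi2 PY QY = Fin e -> 0 <= d - e.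
Proof.
  intros HD HE. enough (0 * (d - e) <= 1 * (d - e)) by lra.
  apply (divergence_drop_compare_deriv2 pearson pearson (fun t => 2 * (t - 1)) (fun t => 2 * (t - 1)) (fun _ => 2) (fun _ => 2) 1 0 d d e e);
    auto using nonneg_has_affine_minorant, pearson_nonneg, pearson_deriv2_on.
  intros t _. lra.
Qed.

Lemma neyman_drop_nonneg d e : chi2 Q P = Fin d -> chi2 QY PY = Fin e -> 0 <= d - e.
Proof.
  intros HD HE. rewrite <- Df_neyman in HD by auto. rewrite <- Df_neyman in HE by auto.
  enough (0 * (d - e) <= 1 * (d - e)) by lra.
  apply (divergence_drop_compare_deriv2 neyman neyman (fun t => 1 - 1 / t ^ 2) (fun t => 1 - 1 / t ^ 2)
    (fun t => 2 / t ^ 3) (fun t => 2 / t ^ 3) 1 0 d d e e); auto.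
  - apply nonneg_has_affine_minorant, neyman_nonneg.
  - apply nonneg_has_affine_minorant, neyman_nonneg.
  - apply neyman_deriv2_on, intI_pos.
  - apply neyman_deriv2_on, intI_pos.
  - intros t It. pose proof (intI_pos _ _ _ It). assert (0 < t ^ 3) by (apply pow_lt; lra).
    assert (0 <= 2 / t ^ 3) by (apply Rmult_le_pos; [lra|left; now apply Rinv_0_lt_compat]). lra.
Qed.

Section ConvexDivergence.
Variable f : R -> R.
Hypothesis Hc : convex_pos f.

Lemma cf_ok_pearson_drop_lb c : cf_ok f (intI P Q) c ->
  ge_diff (Df f P Q) (Df f PY QY) (chi2 P Q) (chi2 PY QY) c.
Proof.
  intros [Hc0 Hgap] a b d e HA HB HC HD.
  destruct (choice (fun t a => 0 < t -> is_rderiv f t a)) as [sg Hsg].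
  { intros t. destruct (Rlt_le_dec 0 t) as [r|r].
    - destruct (rderiv_exists f Hc t r) as [a0 Ha0]. now exists a0.
    - exists 0. intros. lra. }
  split; [|apply Rmult_le_pos; [lra|now apply pearson_drop_nonneg]].
  rewrite <- (Rmult_1_l (a - b)).
  apply (divergence_drop_compare P Q W HP HQ SP SQ HW HWy f pearson sg (fun t => 2 * (t - 1)));
    auto using convex_pos_has_affine_minorant, nonneg_has_affine_minorant, pearson_nonneg.
  intros u v Iu Iv. replace (breg pearson _ v u) with ((v - u) ^ 2) by (unfold breg, pearson; ring).
  rewrite Rmult_1_l.
  apply (breg_slope_gap f Hc (intI P Q)); auto.
  - apply intI_is_interval.
  - apply intI_pos.
  - intros t It. apply Hsg, (intI_pos _ _ _ It).
  - intros u' v' Iu' Iv' Huv. apply Hgap; auto; apply Hsg; eapply intI_pos; eauto.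
Qed.

Lemma twice_diff_on_intI f2 : twice_diff_on f (intI P Q) f2 ->
  exists f1, deriv2_on (intI P Q) f f1 f2 /\ forall t, intI P Q t -> 0 <= f2 t.
Proof.
  intros Htd. destruct (twice_diff_on_deriv2_on f f2 _ Htd) as [f1 Hd]. exists f1. split; [exact Hd|].
  intros t It. destruct Htd as [f1' [H1 H2]].
  destruct (H1 t It) as [d [Hd0 Hs]].
  apply (convex_pos_deriv2_nonneg f f1' f2 t Hc (intI_pos _ _ _ It)); [now exists d|auto].
Qed.

Section TwiceDiff.
Variables (f1 f2 : R -> R).
Hypotheses (Hd : deriv2_on (intI P Q) f f1 f2) (Hf2 : forall t, intI P Q t -> 0 <= f2 t).

Let I1 : intI P Q 1. Proof. now apply intI_one. Qed.

Lemma rderiv_intI t a : intI P Q t -> is_rderiv f t a -> a = f1 t.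
Proof.
  intros It Ha. apply (rderiv_unique f t); [exact Ha|]. apply derivable_pt_lim_rderiv, Hd, It.
Qed.

Lemma cf_ok_half_Rinf : cf_ok f (intI P Q) (/ 2 * Rinf (img (intI P Q) f2)).
Proof.
  pose proof (Rinf_img_nonneg _ _ 1 Hf2 I1). split; [lra|].
  intros u v a b Iu Iv Huv Ha Hb.
  rewrite (rderiv_intI u a Iu Ha), (rderiv_intI v b Iv Hb).
  destruct (MVT_cor2 f1 f2 u v Huv) as [xi [Hxi1 Hxi2]].
  { intros t Ht. apply Hd, (intI_between P Q u v); auto. }
  assert (Ixi : intI P Q xi) by (apply (intI_between P Q u v); auto; lra).
  pose proof (Rinf_img_le _ _ xi Hf2 Ixi).
  replace (2 * (/ 2 * Rinf (img (intI P Q) f2))) with (Rinf (img (intI P Q) f2)) by field.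
  nra.
Qed.

Lemma intI_other_point : (exists x, P x <> Q x) -> forall t, exists s, intI P Q s /\ s <> t.
Proof.
  intros [x0 Hx0] t. set (r0 := P x0 / Q x0).
  assert (r0 <> 1).
  { intros E. apply Hx0. unfold r0 in E. specialize (HQ x0).
    apply (Rmult_eq_compat_r (Q x0)) in E. field_simplify in E; lra. }
  destruct (Req_dec t 1) as [->|ne].
  - exists r0. split; [apply intI_ratio; auto|exact H].
  - exists 1. auto.
Qed.

Lemma cf_ok_le_half_Rinf : (exists x, P x <> Q x) ->
  forall c, cf_ok f (intI P Q) c -> c <= / 2 * Rinf (img (intI P Q) f2).
Proof.
  intros Hne c [Hc0 Hgap].
  assert (Hsl : forall s1 s2, intI P Q s1 -> intI P Q s2 -> s1 < s2 -> 2 * c * (s2 - s1) <= f1 s2 - f1 s1).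
  { intros s1 s2 I1' I2' H12. apply Rge_le, Hgap; auto; apply derivable_pt_lim_rderiv, Hd; auto. }
  enough (2 * c <= Rinf (img (intI P Q) f2)) by lra.
  apply Rinf_greatest; [now exists (f2 1), 1|]. intros y [t [It ->]].
  destruct (intI_other_point Hne t) as [s [Is Hst]].
  destruct (Rtotal_order t s) as [lt|[eq|gt]]; [|congruence|].
  - apply (derivable_pt_lim_ge_right f1 t (f2 t) (2 * c) (s - t)); [apply Hd, It|lra|].
    intros h Hh. apply Rle_div_iff; [lra|].
    assert (intI P Q (t + h)) by (apply (intI_between P Q t s); auto; lra).
    specialize (Hsl t (t + h) It H ltac:(lra)). replace (t + h - t) with h in Hsl by ring. lra.
  - apply (derivable_pt_lim_ge_left f1 t (f2 t) (2 * c) (t - s)); [apply Hd, It|lra|].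
    intros h Hh. replace ((f1 (t + h) - f1 t) / h) with ((f1 t - f1 (t + h)) / (- h)) by (field; lra).
    apply Rle_div_iff; [lra|].
    assert (intI P Q (t + h)) by (apply (intI_between P Q s t); auto; lra).
    specialize (Hsl (t + h) t H It ltac:(lra)). lra.
Qed.

Lemma neyman_drop_lb :
  ge_diff (Df f P Q) (Df f PY QY) (chi2 Q P) (chi2 QY PY)
    (/ 2 * Rinf (img (intI P Q) (fun t => t ^ 3 * f2 t))).
Proof.
  set (Ri := Rinf (img (intI P Q) (fun t => t ^ 3 * f2 t))).
  assert (Hg : forall t, intI P Q t -> 0 <= t ^ 3 * f2 t).
  { intros t It. pose proof (intI_pos _ _ _ It). apply Rmult_le_pos; [left; apply pow_lt|]; auto. }
  intros a b d e HA HB HC HD. split.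
  - rewrite <- Df_neyman in HC by auto. rewrite <- Df_neyman in HD by auto.
    rewrite <- (Rmult_1_l (a - b)).
    apply (divergence_drop_compare_deriv2 f neyman f1 (fun t => 1 - 1 / t ^ 2) f2 (fun t => 2 / t ^ 3));
      auto.
    + now apply convex_pos_has_affine_minorant.
    + apply nonneg_has_affine_minorant, neyman_nonneg.
    + apply neyman_deriv2_on, intI_pos.
    + intros t It. pose proof (intI_pos _ _ _ It). rewrite neyman_deriv2_scal by lra.
      rewrite Rmult_1_l. apply Rdiv_le_iff; [now apply pow_lt|].
      rewrite Rmult_comm. exact (Rinf_img_le _ (fun t => t ^ 3 * f2 t) t Hg It).
  - pose proof (Rinf_img_nonneg _ (fun t => t ^ 3 * f2 t) 1 Hg I1) as Ri0. fold Ri in Ri0.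
    apply Rmult_le_pos; [lra|].
    now apply neyman_drop_nonneg.
Qed.

Lemma pearson_drop_ub : bound (img (intI P Q) f2) ->
  le_diff (Df f P Q) (Df f PY QY) (chi2 P Q) (chi2 PY QY) (/ 2 * Rsup (img (intI P Q) f2)).
Proof.
  intros Hb a b d e HA HB HC HD. rewrite <- (Rmult_1_l (a - b)).
  apply (divergence_drop_compare_deriv2 pearson f (fun t => 2 * (t - 1)) f1 (fun _ => 2) f2); auto.
  - apply nonneg_has_affine_minorant, pearson_nonneg.
  - now apply convex_pos_has_affine_minorant.
  - apply pearson_deriv2_on.
  - intros t It. pose proof (Rsup_img_ge _ _ t Hb It). lra.
Qed.

Lemma neyman_drop_ub : bound (img (intI P Q) (fun t => t ^ 3 * f2 t)) ->
  le_diff (Df f P Q) (Df f PY QY) (chi2 Q P) (chi2 QY PY)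
    (/ 2 * Rsup (img (intI P Q) (fun t => t ^ 3 * f2 t))).
Proof.
  intros Hb a b d e HA HB HC HD.
  rewrite <- Df_neyman in HC by auto. rewrite <- Df_neyman in HD by auto.
  rewrite <- (Rmult_1_l (a - b)).
  apply (divergence_drop_compare_deriv2 neyman f (fun t => 1 - 1 / t ^ 2) f1 (fun t => 2 / t ^ 3) f2); auto.
  - apply nonneg_has_affine_minorant, neyman_nonneg.
  - now apply convex_pos_has_affine_minorant.
  - apply neyman_deriv2_on, intI_pos.
  - intros t It. pose proof (intI_pos _ _ _ It). rewrite neyman_deriv2_scal by lra.
    rewrite Rmult_1_l. apply Rle_div_iff; [now apply pow_lt|].
    rewrite Rmult_comm. now apply (Rsup_img_ge _ (fun t => t ^ 3 * f2 t)).
Qed.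

End TwiceDiff.
End ConvexDivergence.
End DropBounds.

(** * Asymptotics as [P_X] tends to [Q_X] *)

Section Ratio.
Context {X Y : Type} (P Q : X -> R) (W : X -> Y -> R).
Hypotheses (HP : forall x, 0 < P x) (HQ : forall x, 0 < Q x)
  (SP : has_sum P 1) (SQ : has_sum Q 1) (HW : stochastic W) (HWy : forall y, exists x, 0 < W x y).

Lemma drop_ratio_between phi p d1 dd1 d2 dd2 m M a b d e :
  has_affine_minorant phi -> has_affine_minorant p ->
  deriv2_on (intI P Q) phi d1 dd1 -> deriv2_on (intI P Q) p d2 dd2 ->
  (forall t, intI P Q t -> 0 <= dd2 t) ->
  (forall t, intI P Q t -> m * dd2 t <= dd1 t <= M * dd2 t) ->
  Df phi P Q = Fin a -> Df phi (push P W) (push Q W) = Fin b ->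
  Df p P Q = Fin d -> Df p (push P W) (push Q W) = Fin e -> d - e <> 0 ->
  m <= (a - b) / (d - e) <= M.
Proof.
  intros Mphi Mp Dphi Dp Hdd2 Hdd1 HA HB HC HD Hne.
  pose proof (divergence_drop_compare_deriv2 P Q W HP HQ SP SQ HW HWy) as Cmp.
  assert (0 * (d - e) <= 1 * (d - e)) by (apply (Cmp p p d2 d2 dd2 dd2); auto;
    intros t It; specialize (Hdd2 t It); lra).
  assert (m * (d - e) <= 1 * (a - b))
    by (apply (Cmp phi p d1 d2 dd1 dd2); auto; intros t It; specialize (Hdd1 t It); lra).
  assert (1 * (a - b) <= M * (d - e))
    by (apply (Cmp p phi d2 d1 dd2 dd1); auto; intros t It; specialize (Hdd1 t It); lra).
  split; [apply Rle_div_iff|apply Rdiv_le_iff]; lra.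
Qed.

End Ratio.

Lemma ratio_lim_intro (A B C D : nat -> ER) L :
  (forall eps, 0 < eps -> exists N, forall n a b d e, (N <= n)%nat ->
     A n = Fin a -> B n = Fin b -> C n = Fin d -> D n = Fin e -> d - e <> 0 ->
     L - eps <= (a - b) / (d - e) <= L + eps) ->
  ratio_lim A B C D L.
Proof.
  intros H eps He. destruct (H (eps / 2) ltac:(lra)) as [N HN]. exists N.
  intros n a b d e Hn HA HB HC HD Hne. specialize (HN n a b d e Hn HA HB HC HD Hne).
  apply Rabs_def1; lra.
Qed.

Section Asymptotics.
Context {X Y : Type} (Q : X -> R) (W : X -> Y -> R) (Pn : nat -> X -> R) (f f2 : R -> R).
Hypotheses (HQ : forall x, 0 < Q x) (SQ : has_sum Q 1) (HW : stochastic W)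
  (HWy : forall y, exists x, 0 < W x y) (Hc : convex_pos f) (Hpmf : forall n, pmf (Pn n))
  (Hinf : Un_cv (fun n => Rinf (fun r => exists x, r = Pn n x / Q x)) 1)
  (Hsup : Un_cv (fun n => Rsup (fun r => exists x, r = Pn n x / Q x)) 1)
  (HC2 : C2_at_1 f f2).

(* [intI (Pn n) Q] lies between the infimum and the supremum of the ratios, which tend to [1]. *)
Lemma intI_shrinks del : 0 < del -> exists N, forall n, (N <= n)%nat ->
  (forall x, 0 < Pn n x) /\ (forall t, intI (Pn n) Q t -> Rabs (t - 1) < del).
Proof.
  intros Hdel. set (del' := Rmin del 1).
  assert (Hdel' : 0 < del' <= del /\ del' <= 1).
  { unfold del'. pose proof (Rmin_l del 1). pose proof (Rmin_r del 1).
    split; [split; [apply Rmin_glb_lt|]|]; lra. }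
  destruct (Hinf del' ltac:(lra)) as [N1 HN1]. destruct (Hsup del' ltac:(lra)) as [N2 HN2].
  destruct (has_sum_inhabited Q 1 SQ ltac:(lra)) as [x0].
  exists (max N1 N2). intros n Hn.
  specialize (HN1 n ltac:(lia)). specialize (HN2 n ltac:(lia)). unfold Rdist in HN1, HN2.
  set (En := fun r => exists x, r = Pn n x / Q x) in *.
  destruct (Hpmf n) as [Pnn _].
  assert (Elb : forall r, En r -> 0 <= r).
  { intros r [x ->]. apply Rmult_le_pos; [apply Pnn|left; now apply Rinv_0_lt_compat]. }
  assert (RiL : forall x, Rinf En <= Pn n x / Q x) by (intros x; apply (Rinf_lb _ _ 0); auto; now exists x).
  assert (Eb : bound En).
  { apply NNPP. intros nb. rewrite (Rsup_unbounded En nb) in HN2. rewrite Rabs_left in HN2 by lra. lra. }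
  assert (RsU : forall x, Pn n x / Q x <= Rsup En) by (intros x; apply Rsup_ub; auto; now exists x).
  apply Rabs_def2 in HN1. apply Rabs_def2 in HN2.
  split.
  - intros x. specialize (RiL x). specialize (HQ x).
    replace (Pn n x) with (Pn n x / Q x * Q x) by (field; lra). apply Rmult_lt_0_compat; lra.
  - intros t [_ [Ht1 Ht2]]. specialize (Ht1 (Rinf En) RiL). specialize (Ht2 (Rsup En) RsU).
    apply Rabs_def1; lra.
Qed.

Lemma deriv2_near_one eps : 0 < eps -> exists N, forall n, (N <= n)%nat ->
  (forall x, 0 < Pn n x) /\ exists f1, deriv2_on (intI (Pn n) Q) f f1 f2 /\
    forall t, intI (Pn n) Q t -> Rabs (f2 t - f2 1) < eps /\ Rabs (t ^ 3 * f2 t - f2 1) < eps.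
Proof.
  intros He. destruct HC2 as [d0 [f1 [Hd0 [Hder Hcont]]]].
  destruct (continuity_pt_eps f2 1 Hcont eps He) as [d1 [Hd1 C1]].
  assert (Hc3 : continuity_pt (fun t => t ^ 3 * f2 t) 1).
  { apply (continuity_pt_mult (fun t => t ^ 3) f2 1); auto.
    apply derivable_continuous_pt. exists (3 * 1 ^ 2). apply cube_deriv. }
  destruct (continuity_pt_eps _ 1 Hc3 eps He) as [d2 [Hd2 C2]].
  replace (1 ^ 3 * f2 1) with (f2 1) in C2 by ring.
  destruct (intI_shrinks (Rmin d0 (Rmin d1 d2))) as [N HN]; [repeat apply Rmin_glb_lt; auto|].
  exists N. intros n Hn. destruct (HN n Hn) as [Pp Ht]. split; [exact Pp|].
  assert (Hnear : forall t, intI (Pn n) Q t -> Rabs (t - 1) < d0 /\ Rabs (t - 1) < d1 /\ Rabs (t - 1) < d2).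
  { intros t It. specialize (Ht t It). pose proof (Rmin_l d0 (Rmin d1 d2)).
    pose proof (Rmin_r d0 (Rmin d1 d2)). pose proof (Rmin_l d1 d2). pose proof (Rmin_r d1 d2). lra. }
  exists f1. split; [split|]; intros t It; destruct (Hnear t It) as [N0 [N1 N2]].
  - apply Hder; auto.
  - apply Hder; auto.
  - split; [apply C1|apply C2]; auto.
Qed.

Lemma pearson_ratio_lim :
  ratio_lim (fun n => Df f (Pn n) Q) (fun n => Df f (push (Pn n) W) (push Q W))
    (fun n => chi2 (Pn n) Q) (fun n => chi2 (push (Pn n) W) (push Q W)) (f2 1 / 2).
Proof.
  apply ratio_lim_intro. intros eps He.
  destruct (deriv2_near_one (2 * eps) ltac:(lra)) as [N HN]. exists N.
  intros n a b d e Hn HA HB HC HD Hne. destruct (HN n Hn) as [Pp [f1 [Hd Hnear]]].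
  destruct (pmf_has_sum _ (Hpmf n)) as [_ SP].
  replace (f2 1 / 2 - eps) with ((f2 1 - 2 * eps) / 2) by field.
  replace (f2 1 / 2 + eps) with ((f2 1 + 2 * eps) / 2) by field.
  apply (drop_ratio_between (Pn n) Q W Pp HQ SP SQ HW HWy f pearson f1 f2 (fun t => 2 * (t - 1))
    (fun _ => 2)); auto.
  - now apply convex_pos_has_affine_minorant.
  - apply nonneg_has_affine_minorant, pearson_nonneg.
  - apply pearson_deriv2_on.
  - intros t _. lra.
  - intros t It. destruct (Hnear t It) as [K _]. apply Rabs_def2 in K. lra.
Qed.

Lemma neyman_ratio_lim :
  ratio_lim (fun n => Df f (Pn n) Q) (fun n => Df f (push (Pn n) W) (push Q W))
    (fun n => chi2 Q (Pn n)) (fun n => chi2 (push Q W) (push (Pn n) W)) (f2 1 / 2).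
Proof.
  apply ratio_lim_intro. intros eps He.
  destruct (deriv2_near_one (2 * eps) ltac:(lra)) as [N HN]. exists N.
  intros n a b d e Hn HA HB HC HD Hne. destruct (HN n Hn) as [Pp [f1 [Hd Hnear]]].
  destruct (pmf_has_sum _ (Hpmf n)) as [NP SP].
  assert (PYp : forall y, 0 < push (Pn n) W y) by (intros y; apply push_pos; auto).
  assert (QYp : forall y, 0 < push Q W y) by (intros y; apply push_pos; auto; intros x; now apply Rlt_le).
  rewrite <- Df_neyman in HC by auto. rewrite <- Df_neyman in HD by auto.
  replace (f2 1 / 2 - eps) with (/ 2 * (f2 1 - 2 * eps)) by field.
  replace (f2 1 / 2 + eps) with (/ 2 * (f2 1 + 2 * eps)) by field.
  apply (drop_ratio_between (Pn n) Q W Pp HQ SP SQ HW HWy f neyman f1 f2 (fun t => 1 - 1 / t ^ 2)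
    (fun t => 2 / t ^ 3)); auto.
  - now apply convex_pos_has_affine_minorant.
  - apply nonneg_has_affine_minorant, neyman_nonneg.
  - apply neyman_deriv2_on, intI_pos.
  - intros t It. pose proof (intI_pos _ _ _ It). apply Rmult_le_pos; [lra|].
    left. apply Rinv_0_lt_compat, pow_lt. lra.
  - intros t It. pose proof (intI_pos _ _ _ It). assert (0 < t ^ 3) by (apply pow_lt; lra).
    destruct (Hnear t It) as [_ K]. apply Rabs_def2 in K.
    rewrite !neyman_deriv2_scal by lra.
    split; [apply Rdiv_le_iff|apply Rle_div_iff]; lra.
Qed.

End Asymptotics.

Lemma pearson_cf_ok_one (I : R -> Prop) : cf_ok pearson I 1.
Proof.
  split; [lra|]. intros u v a b _ _ Huv Ha Hb.
  rewrite (rderiv_unique pearson u a (2 * (u - 1)) Ha (derivable_pt_lim_rderiv _ _ _ (pearson_deriv u))).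
  rewrite (rderiv_unique pearson v b (2 * (v - 1)) Hb (derivable_pt_lim_rderiv _ _ _ (pearson_deriv v))).
  lra.
Qed.

Lemma pearson_twice_diff_on (I : R -> Prop) : twice_diff_on pearson I (fun _ => 2).
Proof.
  exists (fun t => 2 * (t - 1)). split; intros t _; [|apply pearson_deriv1].
  exists 1. split; [lra|]. intros s _. apply pearson_deriv.
Qed.

Lemma neyman_twice_diff_on (I : R -> Prop) : (forall t, I t -> 0 < t) ->
  twice_diff_on neyman I (fun t => 2 / t ^ 3).
Proof.
  intros HI. exists (fun t => 1 - 1 / t ^ 2). split; intros t It; [|apply neyman_deriv1; auto].
  pose proof (HI t It). exists (t / 2). split; [lra|].
  intros s Hs. apply Rabs_def2 in Hs. apply neyman_deriv. lra.
Qed.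

Theorem theorem1 (X Y : Type) (PX QX : X -> R) (W : X -> Y -> R) (f : R -> R)
  (HXc : countable X) (HYc : countable Y)
  (HPX : pmf PX) (HQX : pmf QX)
  (HPpos : forall x, 0 < PX x) (HQpos : forall x, 0 < QX x)
  (HW : stochastic W) (HWy : forall y, exists x, 0 < W x y)
  (Hconv : convex_pos f) (Hf1 : f 1 = 0) :
  let PY := push PX W in
  let QY := push QX W in
  let I := intI PX QX in
  (forall c, cf_ok f I c ->
     ge_diff (Df f PX QX) (Df f PY QY) (chi2 PX QX) (chi2 PY QY) c) /\
  (forall f2 : R -> R, twice_diff_on f I f2 ->
     (cf_ok f I (/ 2 * Rinf (img I f2)) /\
      ((exists x, PX x <> QX x) ->
         forall c, cf_ok f I c -> c <= / 2 * Rinf (img I f2))) /\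
     ge_diff (Df f PX QX) (Df f PY QY) (chi2 QX PX) (chi2 QY PY)
       (/ 2 * Rinf (img I (fun t => t ^ 3 * f2 t))) /\
     (bound (img I f2) ->
        le_diff (Df f PX QX) (Df f PY QY) (chi2 PX QX) (chi2 PY QY)
          (/ 2 * Rsup (img I f2))) /\
     (bound (img I (fun t => t ^ 3 * f2 t)) ->
        le_diff (Df f PX QX) (Df f PY QY) (chi2 QX PX) (chi2 QY PY)
          (/ 2 * Rsup (img I (fun t => t ^ 3 * f2 t))))) /\
  (cf_ok (fun t => (t - 1) ^ 2) I 1 /\
   twice_diff_on (fun t => (t - 1) ^ 2) I (fun _ => 2) /\
   / 2 * Rinf (img I (fun _ => 2)) = 1 /\
   / 2 * Rsup (img I (fun _ => 2)) = 1 /\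
   Df (fun t => (1 - t) ^ 2 / t) PX QX = chi2 QX PX /\
   Df (fun t => (1 - t) ^ 2 / t) PY QY = chi2 QY PY /\
   twice_diff_on (fun t => (1 - t) ^ 2 / t) I (fun t => 2 / t ^ 3) /\
   / 2 * Rinf (img I (fun t => t ^ 3 * (2 / t ^ 3))) = 1 /\
   / 2 * Rsup (img I (fun t => t ^ 3 * (2 / t ^ 3))) = 1) /\
  (forall (Pn : nat -> X -> R) (f2 : R -> R),
     (forall n, pmf (Pn n)) ->
     (forall x, Un_cv (fun n => Pn n x) (QX x)) ->
     Un_cv (fun n => Rinf (fun r => exists x, r = Pn n x / QX x)) 1 ->
     Un_cv (fun n => Rsup (fun r => exists x, r = Pn n x / QX x)) 1 ->
     C2_at_1 f f2 ->
     ratio_lim (fun n => Df f (Pn n) QX) (fun n => Df f (push (Pn n) W) QY)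
               (fun n => chi2 (Pn n) QX) (fun n => chi2 (push (Pn n) W) QY)
               (f2 1 / 2) /\
     ratio_lim (fun n => Df f (Pn n) QX) (fun n => Df f (push (Pn n) W) QY)
               (fun n => chi2 QX (Pn n)) (fun n => chi2 QY (push (Pn n) W))
               (f2 1 / 2)).
Proof.
  destruct (pmf_has_sum PX HPX) as [NP SP]. destruct (pmf_has_sum QX HQX) as [NQ SQ].
  assert (I1 : intI PX QX 1) by now apply intI_one.
  assert (HPY : forall y, 0 < push PX W y) by (intros y; now apply push_pos).
  assert (HQY : forall y, 0 < push QX W y) by (intros y; now apply push_pos).
  cbv zeta. split; [|split; [|split]].
  - exact (cf_ok_pearson_drop_lb PX QX W HPpos HQpos SP SQ HW HWy f Hconv).
  - intros f2 Htd.
    destruct (twice_diff_on_intI PX QX f Hconv f2 Htd) as [f1 [Hd Hf2]].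
    split; [split|split; [|split]].
    + exact (cf_ok_half_Rinf PX QX HPpos HQpos SP SQ f f1 f2 Hd Hf2).
    + exact (cf_ok_le_half_Rinf PX QX HPpos HQpos SP SQ f f1 f2 Hd).
    + exact (neyman_drop_lb PX QX W HPpos HQpos SP SQ HW HWy f Hconv f1 f2 Hd Hf2).
    + exact (pearson_drop_ub PX QX W HPpos HQpos SP SQ HW HWy f Hconv f1 f2 Hd).
    + exact (neyman_drop_ub PX QX W HPpos HQpos SP SQ HW HWy f Hconv f1 f2 Hd).
  - destruct (img_Rinf_Rsup_const (intI PX QX) (fun _ => 2) 2 1 I1 (fun _ _ => eq_refl)) as [C1 C2].
    destruct (img_Rinf_Rsup_const (intI PX QX) (fun t => t ^ 3 * (2 / t ^ 3)) 2 1 I1) as [C3 C4].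
    { intros t It. pose proof (intI_pos _ _ _ It). field. lra. }
    rewrite C1, C2, C3, C4.
    split; [apply pearson_cf_ok_one|]. split; [apply pearson_twice_diff_on|].
    split; [field|]. split; [field|].
    split; [now apply Df_neyman|]. split; [now apply Df_neyman|].
    split; [apply neyman_twice_diff_on, intI_pos|]. split; field.
  - intros Pn f2 Hpmf _ Hinf Hsup HC2. split.
    + exact (pearson_ratio_lim QX W Pn f f2 HQpos SQ HW HWy Hconv Hpmf Hinf Hsup HC2).
    + exact (neyman_ratio_lim QX W Pn f f2 HQpos SQ HW HWy Hconv Hpmf Hinf Hsup HC2).
Qed.
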